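(* Let $\Delta v>0$, $v_j=j\Delta v$ ($j\in\mathbb{Z}$), $v_{j+1/2}=(v_j+v_{j+1})/2$. For a real sequence $(f_j)_{j\in\mathbb{Z}}$ (with all sums below absolutely convergent, $n>0$, positive temperatures) define $$\breve f_{j+1/2}=-\tfrac{1}{16}f_{j-1}+\tfrac{9}{16}f_j+\tfrac{9}{16}f_{j+1}-\tfrac{1}{16}f_{j+2},$$ $$n=\Delta v\sum_j f_j,\qquad n\breve u=\Delta v\sum_j v_{j+1/2}\breve f_{j+1/2},\qquad n\breve T=\Delta v\sum_j (v_{j+1/2}-\breve u)^2\breve f_{j+1/2},$$ $$\bar Q^{[4]}_j=\frac{(v_{j+1/2}-\breve u)\breve f_{j+1/2}-(v_{j-1/2}-\breve u)\breve f_{j-1/2}}{\Delta v}+\breve T\,\frac{-f_{j-2}+28f_{j-1}-54f_j+28f_{j+1}-f_{j+2}}{24\Delta v^2}.$$ Let also $f_{j+1/2}=(f_{j+1}+f_j)/2$, $n\tilde u=\sum_j v_{j+1/2}f_{j+1/2}\Delta v$, $n\tilde T=\sum_j (v_{j+1/2}-\tilde u)^2f_{j+1/2}\Delta v$ and $$Q_j=\frac{1}{\Delta v}\Big[f_{j+1/2}(v_{j+1/2}-\tilde u)-f_{j-1/2}(v_{j-1/2}-\tilde u)\Big]+\frac{\tilde T}{\Delta v^2}(f_{j+1}-2f_j+f_{j-1}),$$ and define $$Q^{[4]}_j=\bar Q^{[4]}_j-\frac{1}{24}\big[Q_{j+1}-2Q_j+Q_{j-1}\big].$$ Then: (i) if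 $f_j=f(v_j)$ for a smooth, sufficiently rapidly decaying function $f$, one has $Q(f)(v_j)-Q^{[4]}_j=\mathcal{O}(\Delta v^4)$, where $Q(f)=\partial_v\big((v-u_f)f+T_f\partial_vf\big)$ with $n_f=\int f\,dv$, $n_fu_f=\int vf\,dv$, $n_fT_f=\int|v-u_f|^2f\,dv$; and (ii) for every such sequence, $$\sum_j Q^{[4]}_j\begin{pmatrix}1\\ v_j\\ v_j^2/2\end{pmatrix}\Delta v=\begin{pmatrix}0\\0\\0\end{pmatrix}.$$
   Context: This is a fourth-order velocity discretization of the one-dimensional Fokker--Planck operator $Q(f)=\partial_v\big((v-u_f)f+T_f\partial_v f\big)$. *)

From Stdlib Require Import Reals ZArith.
From Coquelicot Require Import Coquelicot.
Open Scope R_scope.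

Definition zsummable (a : Z -> R) : Prop :=
  ex_series (fun k : nat => Rabs (a (Z.of_nat k))) /\
  ex_series (fun k : nat => Rabs (a (- Z.of_nat k - 1)%Z)).

Definition zsum (a : Z -> R) : R :=
  Series (fun k : nat => a (Z.of_nat k)) +
  Series (fun k : nat => a (- Z.of_nat k - 1)%Z).

Definition vj (dv : R) (j : Z) : R := IZR j * dv.
Definition vhalf (dv : R) (j : Z) : R := (vj dv j + vj dv (j + 1)) / 2.

Definition fbreve (f : Z -> R) (j : Z) : R :=
  - (1/16) * f (j - 1)%Z + (9/16) * f j + (9/16) * f (j + 1)%Z
  - (1/16) * f (j + 2)%Z.

Definition dens (dv : R) (f : Z -> R) : R := dv * zsum f.

Definition ubreve (dv : R) (f : Z -> R) : R :=
  dv * zsum (fun j => vhalf dv j * fbreve f j) / dens dv f.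

Definition Tbreve (dv : R) (f : Z -> R) : R :=
  dv * zsum (fun j => (vhalf dv j - ubreve dv f) ^ 2 * fbreve f j) / dens dv f.

Definition Qbar4 (dv : R) (f : Z -> R) (j : Z) : R :=
  ((vhalf dv j - ubreve dv f) * fbreve f j
   - (vhalf dv (j - 1) - ubreve dv f) * fbreve f (j - 1)%Z) / dv
  + Tbreve dv f *
    (- f (j - 2)%Z + 28 * f (j - 1)%Z - 54 * f j + 28 * f (j + 1)%Z
     - f (j + 2)%Z) / (24 * dv ^ 2).

Definition fmid (f : Z -> R) (j : Z) : R := (f (j + 1)%Z + f j) / 2.

Definition utilde (dv : R) (f : Z -> R) : R :=
  zsum (fun j => vhalf dv j * fmid f j * dv) / dens dv f.

Definition Ttilde (dv : R) (f : Z -> R) : R :=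
  zsum (fun j => (vhalf dv j - utilde dv f) ^ 2 * fmid f j * dv) / dens dv f.

Definition Q2 (dv : R) (f : Z -> R) (j : Z) : R :=
  / dv * (fmid f j * (vhalf dv j - utilde dv f)
          - fmid f (j - 1)%Z * (vhalf dv (j - 1) - utilde dv f))
  + Ttilde dv f / dv ^ 2 * (f (j + 1)%Z - 2 * f j + f (j - 1)%Z).

Definition Q4 (dv : R) (f : Z -> R) (j : Z) : R :=
  Qbar4 dv f j - / 24 * (Q2 dv f (j + 1)%Z - 2 * Q2 dv f j + Q2 dv f (j - 1)%Z).

Definition Rint (g : R -> R) : R :=
  RInt_gen g (Rbar_locally m_infty) (Rbar_locally p_infty).

Definition nf (f : R -> R) : R := Rint f.
Definition uf (f : R -> R) : R := Rint (fun v => v * f v) / nf f.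
Definition Tf (f : R -> R) : R := Rint (fun v => (v - uf f) ^ 2 * f v) / nf f.

Definition QFP (f : R -> R) (v : R) : R :=
  Derive (fun w => (w - uf f) * f w + Tf f * Derive f w) v.

Definition smooth (f : R -> R) : Prop := forall (n : nat) (x : R), ex_derive_n f n x.

Definition rapidly_decaying (f : R -> R) : Prop :=
  forall n m : nat, exists C : R, forall x : R, Rabs x ^ m * Rabs (Derive_n f n x) <= C.

From Stdlib Require Import Reals ZArith Lra Lia List.
From Coquelicot Require Import Coquelicot.
Import ListNotations.
Open Scope R_scope.

(* Conservation: every quantity of the scheme (Q4 weighted by 1, v_j or v_j^2/2, and the
   summands defining the discrete velocities and temperatures) is a finite stencil of
   shifted moment sequences j |-> (j + s)^i f_(j+s).  Sums over Z are shift invariant, so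
   such a sum is the same linear combination of the moments sum_k k^i f_k, and the three
   conservation laws become polynomial identities in these moments; the definitions of
   the discrete velocity and temperature are exactly what cancels the momentum and energy.

   Consistency: for a function decaying like (1 + |v|)^-2 together with its derivatives,
   the grid sum h sum_k g(k h) is the midpoint rule on the cells [k h - h/2, k h + h/2];
   against the corrected primitive G - h^2/24 g' each cell is exact up to O(h^5) with
   weight (1 + |v|)^-2, and the weighted errors telescope to O(h^4).  Hence the discrete
   moments are O(h^4) approximations of n_f, u_f, T_f, while utilde = ubreve and
   Ttilde = Tbreve + h^2/4 hold exactly.  Substituting sixth-order Taylor expansions of f
   at the five stencil points into Q4 leaves h^4 times a combination of bounded
   quantities. *)

(** * Sums over Z *)

Lemma zsummable_ext (a b : Z -> R) :
  (forall j, a j = b j) -> zsummable a -> zsummable b.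
Proof.
  intros E [Hp Hn]; split; [revert Hp | revert Hn]; apply ex_series_ext; intro k; now rewrite E.
Qed.

Lemma zsum_ext (a b : Z -> R) : (forall j, a j = b j) -> zsum a = zsum b.
Proof. intros E; unfold zsum; f_equal; apply Series_ext; intro; now rewrite E. Qed.

Lemma zsummable_le (a b : Z -> R) :
  (forall j, Rabs (a j) <= Rabs (b j)) -> zsummable b -> zsummable a.
Proof.
  intros H [Hp Hn]; split;
    [eapply (ex_series_le (V := R_CompleteNormedModule)); [|exact Hp]
    |eapply (ex_series_le (V := R_CompleteNormedModule)); [|exact Hn]];
    intro k; rewrite Rabs_Rabsolu; apply H.
Qed.

Lemma zsummable_plus (a b : Z -> R) :
  zsummable a -> zsummable b -> zsummable (fun j => a j + b j).
Proof.
  intros [Ap An] [Bp Bn]; split;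
    [eapply (ex_series_le (V := R_CompleteNormedModule)); [|exact (ex_series_plus _ _ Ap Bp)]
    |eapply (ex_series_le (V := R_CompleteNormedModule)); [|exact (ex_series_plus _ _ An Bn)]];
    intro k; rewrite Rabs_Rabsolu; apply Rabs_triang.
Qed.

Lemma zsummable_scal (c : R) (a : Z -> R) : zsummable a -> zsummable (fun j => c * a j).
Proof.
  intros [Ap An]; split;
    [revert Ap | revert An]; intro H; apply (ex_series_scal_l (Rabs c)) in H; revert H;
    apply ex_series_ext; intro k; symmetry; apply Rabs_mult.
Qed.

Lemma zsum_plus (a b : Z -> R) :
  zsummable a -> zsummable b -> zsum (fun j => a j + b j) = zsum a + zsum b.
Proof.
  intros [Ap An] [Bp Bn]; unfold zsum.
  rewrite (Series_plus _ _ (ex_series_Rabs _ Ap) (ex_series_Rabs _ Bp)),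
          (Series_plus _ _ (ex_series_Rabs _ An) (ex_series_Rabs _ Bn)).
  ring.
Qed.

Lemma zsum_scal (c : R) (a : Z -> R) : zsum (fun j => c * a j) = c * zsum a.
Proof. unfold zsum; rewrite !Series_scal_l; ring. Qed.

Lemma zsummable_zero : zsummable (fun _ => 0).
Proof.
  assert (H : ex_series (fun n : nat => 0 * 0 ^ n)).
  { apply (ex_series_scal_l 0 (fun n => 0 ^ n)), ex_series_geom. rewrite Rabs_R0. lra. }
  split; revert H; apply ex_series_ext; intro; rewrite Rabs_R0; simpl; ring.
Qed.

Lemma zsum_zero : zsum (fun _ => 0) = 0.
Proof.
  rewrite (zsum_ext _ (fun _ => 0 * 0)) by (intro; ring).
  rewrite zsum_scal; ring.
Qed.

Lemma zsummable_succ_iff (a : Z -> R) :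
  zsummable a <-> zsummable (fun j => a (j + 1)%Z).
Proof.
  unfold zsummable.
  rewrite (ex_series_incr_1 (fun k => Rabs (a (Z.of_nat k)))).
  rewrite (ex_series_incr_1 (fun k => Rabs (a (- Z.of_nat k - 1 + 1)%Z))).
  split; intros [Hp Hn]; split; [revert Hp | revert Hn | revert Hp | revert Hn];
    apply ex_series_ext; intro k; f_equal; f_equal; lia.
Qed.

Lemma zsum_succ (a : Z -> R) : zsummable a -> zsum (fun j => a (j + 1)%Z) = zsum a.
Proof.
  intros Ha. pose proof (proj1 (zsummable_succ_iff a) Ha) as [_ Hn].
  destruct Ha as [Hp _]. unfold zsum.
  rewrite (Series_incr_1 (fun k => a (Z.of_nat k))) by now apply ex_series_Rabs.
  rewrite (Series_incr_1 (fun k => a (- Z.of_nat k - 1 + 1)%Z)) by now apply ex_series_Rabs.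
  rewrite (Series_ext (fun k => a (Z.of_nat k + 1)%Z) (fun k => a (Z.of_nat (S k))))
    by (intro; f_equal; lia).
  rewrite (Series_ext (fun k => a (- Z.of_nat (S k) - 1 + 1)%Z) (fun k => a (- Z.of_nat k - 1)%Z))
    by (intro; f_equal; lia).
  replace (- Z.of_nat 0 - 1 + 1)%Z with (Z.of_nat 0) by reflexivity.
  ring.
Qed.

Lemma zsum_shift (s : Z) (a : Z -> R) :
  zsummable a -> zsummable (fun j => a (j + s)%Z) /\ zsum (fun j => a (j + s)%Z) = zsum a.
Proof.
  revert a; induction s as [|s IH|s IH] using Z.peano_ind; intros a Ha.
  - split; [eapply zsummable_ext; [|exact Ha] | apply zsum_ext]; intro; f_equal; lia.
  - destruct (IH a Ha) as [Hs Es].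
    pose proof (proj1 (zsummable_succ_iff _) Hs) as Hs1.
    split;
      [eapply zsummable_ext; [|exact Hs1] | rewrite <- Es, <- (zsum_succ _ Hs); apply zsum_ext];
      intro; cbv beta; f_equal; lia.
  - destruct (IH a Ha) as [Hs Es].
    assert (Hs1 : zsummable (fun j => a (j + Z.pred s)%Z)).
    { apply zsummable_succ_iff. eapply zsummable_ext; [|exact Hs]. intro; cbv beta; f_equal; lia. }
    split; [exact Hs1|]. rewrite <- Es, <- (zsum_succ _ Hs1). apply zsum_ext.
    intro; cbv beta; f_equal; lia.
Qed.

(** * Stencils of moment sequences *)

Definition moment (f : Z -> R) (i : nat) (k : Z) : R := IZR k ^ i * f k.

(* An entry [(c, i, s)] stands for the sequence [j |-> c * (j + s) ^ i * f (j + s)]; a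
   stencil stands for the sum of its entries. *)
Definition stencil := list (R * nat * Z).

Fixpoint st_eval (f : Z -> R) (L : stencil) (j : Z) : R :=
  match L with
  | [] => 0
  | (c, i, s) :: L' => c * moment f i (j + s) + st_eval f L' j
  end.

Fixpoint st_moments (m : nat -> R) (L : stencil) : R :=
  match L with
  | [] => 0
  | (c, i, _) :: L' => c * m i + st_moments m L'
  end.

Fixpoint st_deg (L : stencil) : nat :=
  match L with
  | [] => 0
  | (_, i, _) :: L' => Nat.max i (st_deg L')
  end.

Definition st_scale (a : R) (L : stencil) : stencil :=
  map (fun '(c, i, s) => (a * c, i, s)) L.

Definition st_shift (t : Z) (L : stencil) : stencil :=
  map (fun '(c, i, s) => (c, i, (s + t)%Z)) L.

(* Multiplication by [j], written as [(j + s) - s]. *)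
Definition st_mulj (L : stencil) : stencil :=
  flat_map (fun '(c, i, s) => [(c, S i, s); (- c * IZR s, i, s)]) L.

Lemma st_eval_app (f : Z -> R) (L1 L2 : stencil) (j : Z) :
  st_eval f (L1 ++ L2) j = st_eval f L1 j + st_eval f L2 j.
Proof. induction L1 as [|[[c i] s] L1 IH]; simpl; [ring | rewrite IH; ring]. Qed.

Lemma st_eval_scale (f : Z -> R) (a : R) (L : stencil) (j : Z) :
  st_eval f (st_scale a L) j = a * st_eval f L j.
Proof. induction L as [|[[c i] s] L IH]; simpl; [ring | rewrite IH; ring]. Qed.

Lemma st_eval_shift (f : Z -> R) (t : Z) (L : stencil) (j : Z) :
  st_eval f (st_shift t L) j = st_eval f L (j + t).
Proof.
  induction L as [|[[c i] s] L IH]; simpl; [ring|].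
  rewrite IH. replace (j + (s + t))%Z with (j + t + s)%Z by ring. reflexivity.
Qed.

Lemma st_eval_mulj (f : Z -> R) (L : stencil) (j : Z) :
  st_eval f (st_mulj L) j = IZR j * st_eval f L j.
Proof.
  induction L as [|[[c i] s] L IH]; simpl; [ring|].
  rewrite IH. unfold moment. rewrite plus_IZR. simpl. ring.
Qed.

Lemma zsum_st_eval (f : Z -> R) (L : stencil) :
  (forall i, (i <= st_deg L)%nat -> zsummable (moment f i)) ->
  zsummable (st_eval f L) /\ zsum (st_eval f L) = st_moments (fun i => zsum (moment f i)) L.
Proof.
  induction L as [|[[c i] s] L IH]; simpl; intros H.
  - split; [exact zsummable_zero | exact zsum_zero].
  - destruct IH as [HL EL]; [intros k Hk; apply H; lia|].
    destruct (zsum_shift s (moment f i)) as [Hs Es]; [apply H; lia|].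
    split.
    + apply zsummable_plus; [apply zsummable_scal|]; assumption.
    + rewrite zsum_plus, zsum_scal, Es, EL by (try apply zsummable_scal; assumption).
      reflexivity.
Qed.

Definition fbreve_st : stencil :=
  [(-1/16, 0%nat, (-1)%Z); (9/16, 0%nat, 0%Z); (9/16, 0%nat, 1%Z); (-1/16, 0%nat, 2%Z)].

Definition fmid_st : stencil := [(1/2, 0%nat, 1%Z); (1/2, 0%nat, 0%Z)].

Definition laplacian4_st : stencil :=
  [(-1, 0%nat, (-2)%Z); (28, 0%nat, (-1)%Z); (-54, 0%nat, 0%Z); (28, 0%nat, 1%Z);
   (-1, 0%nat, 2%Z)].

Definition st_mul_vhalf (dv : R) (L : stencil) : stencil :=
  st_scale dv (st_mulj L) ++ st_scale (dv / 2) L.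

Definition st_flux (dv u : R) (L : stencil) : stencil :=
  st_mul_vhalf dv L ++ st_scale (- u) L.

Definition st_bdiff (L : stencil) : stencil := L ++ st_scale (-1) (st_shift (-1) L).

Definition st_d2 (L : stencil) : stencil :=
  st_shift 1 L ++ st_scale (-2) L ++ st_shift (-1) L.

Definition Q2_st (dv ut Tt : R) : stencil :=
  st_scale (/ dv) (st_bdiff (st_flux dv ut fmid_st))
  ++ st_scale (Tt / dv ^ 2) (st_d2 [(1, 0%nat, 0%Z)]).

Definition Qbar4_st (dv ub Tb : R) : stencil :=
  st_scale (/ dv) (st_bdiff (st_flux dv ub fbreve_st))
  ++ st_scale (Tb / (24 * dv ^ 2)) laplacian4_st.

Definition Q4_st (dv ub Tb ut Tt : R) : stencil :=
  Qbar4_st dv ub Tb ++ st_scale (- / 24) (st_d2 (Q2_st dv ut Tt)).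

Lemma st_eval_mul_vhalf (f : Z -> R) (dv : R) (L : stencil) (j : Z) :
  st_eval f (st_mul_vhalf dv L) j = vhalf dv j * st_eval f L j.
Proof.
  unfold st_mul_vhalf, vhalf, vj.
  rewrite st_eval_app, !st_eval_scale, st_eval_mulj, plus_IZR. field.
Qed.

Lemma st_eval_flux (f : Z -> R) (dv u : R) (L : stencil) (j : Z) :
  st_eval f (st_flux dv u L) j = (vhalf dv j - u) * st_eval f L j.
Proof.
  unfold st_flux. rewrite st_eval_app, st_eval_scale, st_eval_mul_vhalf. ring.
Qed.

Lemma st_eval_bdiff (f : Z -> R) (L : stencil) (j : Z) :
  st_eval f (st_bdiff L) j = st_eval f L j - st_eval f L (j - 1).
Proof.
  unfold st_bdiff. rewrite st_eval_app, st_eval_scale, st_eval_shift.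
  change (j + -1)%Z with (j - 1)%Z. ring.
Qed.

Lemma st_eval_d2 (f : Z -> R) (L : stencil) (j : Z) :
  st_eval f (st_d2 L) j = st_eval f L (j + 1) - 2 * st_eval f L j + st_eval f L (j - 1).
Proof.
  unfold st_d2. rewrite !st_eval_app, st_eval_scale, !st_eval_shift.
  change (j + -1)%Z with (j - 1)%Z. ring.
Qed.

Lemma st_eval_point (f : Z -> R) (j : Z) : st_eval f [(1, 0%nat, 0%Z)] j = f j.
Proof. simpl. unfold moment. rewrite Z.add_0_r. ring. Qed.

Lemma st_eval_fbreve (f : Z -> R) (j : Z) : st_eval f fbreve_st j = fbreve f j.
Proof.
  unfold fbreve, fbreve_st. simpl. unfold moment. rewrite Z.add_0_r.
  change (j + -1)%Z with (j - 1)%Z. field.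
Qed.

Lemma st_eval_fmid (f : Z -> R) (j : Z) : st_eval f fmid_st j = fmid f j.
Proof. unfold fmid, fmid_st. simpl. unfold moment. rewrite Z.add_0_r. field. Qed.

Lemma st_eval_laplacian4 (f : Z -> R) (j : Z) :
  st_eval f laplacian4_st j
  = - f (j - 2)%Z + 28 * f (j - 1)%Z - 54 * f j + 28 * f (j + 1)%Z - f (j + 2)%Z.
Proof.
  unfold laplacian4_st. simpl. unfold moment. rewrite Z.add_0_r.
  change (j + -1)%Z with (j - 1)%Z. change (j + -2)%Z with (j - 2)%Z. field.
Qed.

Lemma Q2_st_eval (dv : R) (f : Z -> R) (j : Z) :
  Q2 dv f j = st_eval f (Q2_st dv (utilde dv f) (Ttilde dv f)) j.
Proof.
  unfold Q2, Q2_st.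
  rewrite st_eval_app, !st_eval_scale, st_eval_bdiff, !st_eval_flux, !st_eval_fmid,
    st_eval_d2, !st_eval_point.
  ring.
Qed.

Lemma Q4_st_eval (dv : R) (f : Z -> R) (j : Z) :
  Q4 dv f j = st_eval f (Q4_st dv (ubreve dv f) (Tbreve dv f) (utilde dv f) (Ttilde dv f)) j.
Proof.
  unfold Q4, Qbar4, Q4_st, Qbar4_st.
  rewrite !st_eval_app, !st_eval_scale, st_eval_bdiff, !st_eval_flux, !st_eval_fbreve,
    st_eval_laplacian4, st_eval_d2, <- !Q2_st_eval.
  unfold Rdiv. ring.
Qed.

Lemma zsum_stencil (f g : Z -> R) (L : stencil) (n : nat) :
  (forall i, (i <= n)%nat -> zsummable (moment f i)) -> (st_deg L <= n)%nat ->
  (forall j, g j = st_eval f L j) ->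
  zsum g = st_moments (fun i => zsum (moment f i)) L.
Proof.
  intros Hf Hdeg Hg. rewrite (zsum_ext _ _ Hg).
  apply zsum_st_eval. intros i Hi. apply Hf. lia.
Qed.

(** * Exact conservation *)

Ltac sum_by_stencil Hsum L :=
  rewrite (zsum_stencil _ _ L _ Hsum); [cbn | cbn; lia | intro j].

Section DiscreteMoments.
Variables (dv : R) (f : Z -> R).
Hypothesis dv_neq0 : dv <> 0.
Hypothesis moments_summable : forall i, (i <= 2)%nat -> zsummable (moment f i).
Hypothesis mass_neq0 : zsum (moment f 0) <> 0.

Lemma dens_moment : dens dv f = dv * zsum (moment f 0).
Proof.
  unfold dens. f_equal. apply zsum_ext. intro. unfold moment. simpl. ring.
Qed.

Lemma ubreve_moment : ubreve dv f = dv * zsum (moment f 1) / zsum (moment f 0).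
Proof.
  unfold ubreve. rewrite dens_moment.
  sum_by_stencil moments_summable (st_mul_vhalf dv fbreve_st).
  - field. auto.
  - rewrite st_eval_mul_vhalf, st_eval_fbreve. reflexivity.
Qed.

Lemma Tbreve_moment :
  Tbreve dv f = dv ^ 2 * zsum (moment f 2) / zsum (moment f 0) - ubreve dv f ^ 2.
Proof.
  unfold Tbreve at 1. rewrite dens_moment.
  sum_by_stencil moments_summable
    (st_flux dv (ubreve dv f) (st_flux dv (ubreve dv f) fbreve_st)).
  - rewrite ubreve_moment. field. auto.
  - rewrite !st_eval_flux, st_eval_fbreve. ring.
Qed.

Lemma utilde_moment : utilde dv f = ubreve dv f.
Proof.
  unfold utilde. rewrite dens_moment.
  sum_by_stencil moments_summable (st_scale dv (st_mul_vhalf dv fmid_st)).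
  - rewrite ubreve_moment. field. auto.
  - rewrite st_eval_scale, st_eval_mul_vhalf, st_eval_fmid. ring.
Qed.

Lemma Ttilde_moment : Ttilde dv f = Tbreve dv f + dv ^ 2 / 4.
Proof.
  unfold Ttilde. rewrite dens_moment, utilde_moment.
  sum_by_stencil moments_summable
    (st_scale dv (st_flux dv (ubreve dv f) (st_flux dv (ubreve dv f) fmid_st))).
  - rewrite Tbreve_moment, ubreve_moment. field. auto.
  - rewrite st_eval_scale, !st_eval_flux, st_eval_fmid. ring.
Qed.

End DiscreteMoments.

Section Conservation.
Variables (dv : R) (f : Z -> R).
Hypothesis dv_neq0 : dv <> 0.
Hypothesis moments_summable : forall i, (i <= 3)%nat -> zsummable (moment f i).
Hypothesis mass_neq0 : zsum (moment f 0) <> 0.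

Let moments_summable2 : forall i, (i <= 2)%nat -> zsummable (moment f i).
Proof. intros i Hi. apply moments_summable. lia. Qed.

Let Q4L := Q4_st dv (ubreve dv f) (Tbreve dv f) (utilde dv f) (Ttilde dv f).

Lemma Q4_mass : zsum (fun j => Q4 dv f j * dv) = 0.
Proof.
  sum_by_stencil moments_summable (st_scale dv Q4L).
  - field. auto.
  - unfold Q4L. rewrite st_eval_scale, <- Q4_st_eval. ring.
Qed.

Lemma Q4_momentum : zsum (fun j => Q4 dv f j * vj dv j * dv) = 0.
Proof.
  sum_by_stencil moments_summable (st_scale (dv ^ 2) (st_mulj Q4L)).
  - rewrite ubreve_moment by assumption. field. auto.
  - unfold Q4L, vj. rewrite st_eval_scale, st_eval_mulj, <- Q4_st_eval. ring.
Qed.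

Lemma Q4_energy : zsum (fun j => Q4 dv f j * (vj dv j ^ 2 / 2) * dv) = 0.
Proof.
  sum_by_stencil moments_summable (st_scale (dv ^ 3 / 2) (st_mulj (st_mulj Q4L))).
  - rewrite Tbreve_moment, ubreve_moment by assumption. field. auto.
  - unfold Q4L, vj. rewrite st_eval_scale, !st_eval_mulj, <- Q4_st_eval. field.
Qed.

End Conservation.

Lemma moment_summable_of_weighted (dv : R) (f : Z -> R) (i : nat) : 0 < dv -> (i <= 3)%nat ->
  zsummable (fun j => (1 + Rabs (vj dv j)) ^ 3 * f j) -> zsummable (moment f i).
Proof.
  intros Hdv Hi H.
  apply (zsummable_ext (fun j => (/ dv) ^ i * (vj dv j ^ i * f j)));
    [intro j; unfold moment, vj; rewrite <- Rmult_assoc, <- Rpow_mult_distr;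
     f_equal; f_equal; field; lra|].
  apply zsummable_scal. revert H. apply zsummable_le. intro j.
  rewrite !Rabs_mult, <- RPow_abs. apply Rmult_le_compat_r; [apply Rabs_pos|].
  set (a := Rabs (vj dv j)). assert (0 <= a) by apply Rabs_pos.
  rewrite Rabs_pos_eq by (apply pow_le; lra).
  destruct i as [|[|[|[|i]]]]; simpl; nra || lia.
Qed.

Theorem Q4_conservation (dv : R) (f : Z -> R) :
  0 < dv -> zsummable (fun j => (1 + Rabs (vj dv j)) ^ 3 * f j) -> 0 < dens dv f ->
  zsum (fun j => Q4 dv f j * dv) = 0 /\
  zsum (fun j => Q4 dv f j * vj dv j * dv) = 0 /\
  zsum (fun j => Q4 dv f j * (vj dv j ^ 2 / 2) * dv) = 0.
Proof.
  intros Hdv Hw Hn.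
  assert (Hsum : forall i, (i <= 3)%nat -> zsummable (moment f i))
    by (intros; apply (moment_summable_of_weighted dv); assumption).
  assert (Hm0 : zsum (moment f 0) <> 0).
  { intro E. rewrite dens_moment, E in Hn. lra. }
  assert (Hdv0 : dv <> 0) by lra.
  split; [|split]; [apply Q4_mass | apply Q4_momentum | apply Q4_energy]; assumption.
Qed.

(** * Taylor expansions and rapidly decaying functions *)

Lemma neg_one_pow_sqr (m : nat) : (-1) ^ m * (-1) ^ m = 1.
Proof. rewrite <- Rpow_mult_distr. replace (-1 * -1) with 1 by ring. apply pow1. Qed.

Lemma taylor_lagrange (phi : R -> R) (N : nat) (x s : R) :
  smooth phi ->
  exists z, Rabs (z - x) <= Rabs s /\
    phi (x + s) = sum_f_R0 (fun m => s ^ m / INR (fact m) * Derive_n phi m x) N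
                  + s ^ S N / INR (fact (S N)) * Derive_n phi (S N) z.
Proof.
  intros Hs. destruct (Rtotal_order s 0) as [Hneg|[->|Hpos]].
  - assert (Dn : forall k t, Derive_n (fun t => phi (- t)) k t = (-1) ^ k * Derive_n phi k (- t))
      by (intros; apply Derive_n_comp_opp, filter_forall; intros; apply Hs).
    destruct (Taylor_Lagrange (fun t => phi (- t)) N (- x) (- x - s)) as [z [Hz E]]; [lra| |].
    { intros; apply ex_derive_n_comp_opp, filter_forall; intros; apply Hs. }
    exists (- z). split; [rewrite Rabs_left1, Rabs_left; lra|].
    replace (x + s) with (- (- x - s)) by ring. rewrite E.
    replace (- x - s - - x) with (-1 * s) by ring.
    f_equal; [apply sum_eq; intros m _|]; rewrite Dn, ?Ropp_involutive, Rpow_mult_distr;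
      [rewrite <- (Rmult_1_l (s ^ m / _ * _)), <- (neg_one_pow_sqr m)
      |rewrite <- (Rmult_1_l (s ^ S N / _ * _)), <- (neg_one_pow_sqr (S N))];
      unfold Rdiv; ring.
  - exists x. split; [rewrite Rminus_diag, Rabs_R0; lra|].
    rewrite Rplus_0_r, pow_i by lia. unfold Rdiv. rewrite Rmult_0_l, Rmult_0_l, Rplus_0_r.
    induction N as [|N IH]; [simpl; field|].
    rewrite tech5, <- IH, pow_i by lia. ring.
  - destruct (Taylor_Lagrange phi N x (x + s)) as [z [Hz E]]; [lra| intros; apply Hs |].
    exists z. split; [rewrite !Rabs_pos_eq; lra|].
    rewrite E. replace (x + s - x) with s by ring. reflexivity.
Qed.

Ltac taylor_from_lagrange N :=
  intros Hs;
  match goal with |- exists y, Rabs (y - ?x) <= Rabs ?s /\ _ =>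
    let z := fresh "z" in let Hz := fresh "Hz" in let E := fresh "E" in
    destruct (taylor_lagrange _ N x s Hs) as [z [Hz E]];
    exists z; split; [exact Hz|]; rewrite E
  end;
  cbn [sum_f_R0]; rewrite !INR_IZR_INZ;
  cbn [fact Nat.mul Nat.add Z.of_nat Pos.of_succ_nat Pos.succ Derive_n]; field.

Lemma taylor_deg2 (phi : R -> R) (x s : R) : smooth phi ->
  exists z, Rabs (z - x) <= Rabs s /\
    phi (x + s) = phi x + s * Derive_n phi 1 x + s ^ 2 / 2 * Derive_n phi 2 x
                  + s ^ 3 / 6 * Derive_n phi 3 z.
Proof. taylor_from_lagrange 2%nat. Qed.

Lemma taylor_deg4 (phi : R -> R) (x s : R) : smooth phi ->
  exists z, Rabs (z - x) <= Rabs s /\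
    phi (x + s) = phi x + s * Derive_n phi 1 x + s ^ 2 / 2 * Derive_n phi 2 x
                  + s ^ 3 / 6 * Derive_n phi 3 x + s ^ 4 / 24 * Derive_n phi 4 x
                  + s ^ 5 / 120 * Derive_n phi 5 z.
Proof. taylor_from_lagrange 4%nat. Qed.

Lemma taylor_deg5 (phi : R -> R) (x s : R) : smooth phi ->
  exists z, Rabs (z - x) <= Rabs s /\
    phi (x + s) = phi x + s * Derive_n phi 1 x + s ^ 2 / 2 * Derive_n phi 2 x
                  + s ^ 3 / 6 * Derive_n phi 3 x + s ^ 4 / 24 * Derive_n phi 4 x
                  + s ^ 5 / 120 * Derive_n phi 5 x + s ^ 6 / 720 * Derive_n phi 6 z.
Proof. taylor_from_lagrange 5%nat. Qed.

Lemma smooth_ex_derive (phi : R -> R) (k : nat) (x : R) :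
  smooth phi -> ex_derive (Derive_n phi k) x.
Proof. intros Hs. exact (Hs (S k) x). Qed.

Lemma Derive_n_Derive (phi : R -> R) (k : nat) (t : R) :
  Derive_n (Derive phi) k t = Derive_n phi (S k) t.
Proof. rewrite <- Nat.add_1_r, <- Derive_n_comp. reflexivity. Qed.

Lemma smooth_Derive (phi : R -> R) : smooth phi -> smooth (Derive phi).
Proof.
  intros Hs k y. destruct k as [|k]; [exact I|].
  apply (ex_derive_ext (Derive_n phi (S k))); [|apply smooth_ex_derive, Hs].
  intro t. symmetry. apply Derive_n_Derive.
Qed.

Lemma Derive_n_mul_id (phi : R -> R) (n : nat) (x : R) : smooth phi ->
  Derive_n (fun y => y * phi y) n x = INR n * Derive_n phi (pred n) x + x * Derive_n phi n x.
Proof.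
  intros Hs. revert x. induction n as [|n IH]; intros x; [simpl; ring|].
  change (Derive_n (fun y => y * phi y) (S n) x)
    with (Derive (Derive_n (fun y => y * phi y) n) x).
  rewrite (Derive_ext _ (fun y => INR n * Derive_n phi (pred n) y + y * Derive_n phi n y))
    by apply IH.
  rewrite Derive_plus;
    [|apply ex_derive_scal, smooth_ex_derive, Hs
     |apply ex_derive_mult; [apply ex_derive_id | apply smooth_ex_derive, Hs]].
  rewrite Derive_scal, Derive_mult, Derive_id, S_INR;
    [|apply ex_derive_id | apply smooth_ex_derive, Hs].
  change (Derive (Derive_n phi n) x) with (Derive_n phi (S n) x).
  destruct n as [|n]; [simpl; ring|].
  change (Derive (Derive_n phi (pred (S n))) x) with (Derive_n phi (S n) x).
  simpl pred. ring.
Qed.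

Lemma smooth_mul_id (phi : R -> R) : smooth phi -> smooth (fun y => y * phi y).
Proof.
  intros Hs n x. destruct n as [|n]; [exact I|].
  apply (ex_derive_ext (fun y => INR n * Derive_n phi (pred n) y + y * Derive_n phi n y)).
  { intro; symmetry; apply Derive_n_mul_id, Hs. }
  apply (ex_derive_plus (fun y => INR n * Derive_n phi (pred n) y));
    [apply ex_derive_scal | apply ex_derive_mult; [apply ex_derive_id|]];
    apply smooth_ex_derive, Hs.
Qed.

Lemma rapidly_decaying_mul_id (phi : R -> R) :
  smooth phi -> rapidly_decaying phi -> rapidly_decaying (fun y => y * phi y).
Proof.
  intros Hs Hr n m.
  destruct (Hr (pred n) m) as [C1 H1], (Hr n (S m)) as [C2 H2].
  exists (INR n * C1 + C2). intro x.
  rewrite Derive_n_mul_id by exact Hs.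
  specialize (H1 x); specialize (H2 x). simpl in H2.
  pose proof (pos_INR n). pose proof (pow_le (Rabs x) m (Rabs_pos x)).
  eapply Rle_trans; [apply Rmult_le_compat_l; [lra | apply Rabs_triang]|].
  rewrite Rmult_plus_distr_l, !Rabs_mult, (Rabs_pos_eq (INR n)) by lra.
  replace (Rabs x ^ m * (INR n * Rabs (Derive_n phi (pred n) x))
           + Rabs x ^ m * (Rabs x * Rabs (Derive_n phi n x)))
    with (INR n * (Rabs x ^ m * Rabs (Derive_n phi (pred n) x))
          + Rabs x * Rabs x ^ m * Rabs (Derive_n phi n x)) by ring.
  apply Rplus_le_compat; [apply Rmult_le_compat_l|]; lra.
Qed.

Lemma rapidly_decaying_weighted_bound (phi : R -> R) (n : nat) : rapidly_decaying phi ->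
  exists A, forall x, (1 + Rabs x) ^ 2 * Rabs (Derive_n phi n x) <= A.
Proof.
  intros Hr.
  destruct (Hr n 0%nat) as [C0 H0], (Hr n 1%nat) as [C1 H1], (Hr n 2%nat) as [C2 H2].
  exists (C0 + 2 * C1 + C2). intro x.
  specialize (H0 x); specialize (H1 x); specialize (H2 x). simpl in *.
  replace ((1 + Rabs x) * ((1 + Rabs x) * 1) * Rabs (Derive_n phi n x))
    with (1 * Rabs (Derive_n phi n x) + 2 * (Rabs x * 1 * Rabs (Derive_n phi n x))
          + Rabs x * (Rabs x * 1) * Rabs (Derive_n phi n x)) by ring.
  lra.
Qed.

Lemma QFP_expand (f : R -> R) (x : R) : smooth f ->
  QFP f x = f x + (x - uf f) * Derive f x + Tf f * Derive_n f 2 x.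
Proof.
  intros Hs. unfold QFP. apply is_derive_unique.
  apply (is_derive_plus (fun w => (w - uf f) * f w) (fun w => Tf f * Derive f w)).
  - replace (f x + (x - uf f) * Derive f x) with (1 * f x + (x - uf f) * Derive f x) by ring.
    apply (is_derive_mult (fun w => w - uf f) f);
      [auto_derive; auto; ring | apply Derive_correct, (Hs 1%nat x) | intros; apply Rmult_comm].
  - apply is_derive_scal, Derive_correct, (Hs 2%nat x).
Qed.

(** * Grid sums of functions decaying like (1 + |v|)^-2 *)

Lemma series_le_telescoping (a c : nat -> R) :
  (forall k, Rabs (a k) <= c k - c (S k)) -> (forall k, 0 <= c k) ->
  ex_series (fun k => Rabs (a k)) /\ Rabs (Series a) <= c 0%nat.
Proof.
  intros Ha Hc.
  assert (Hpart : forall n, sum_n (fun k => Rabs (a k)) n <= c 0%nat - c (S n)).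
  { induction n as [|n IH]; [rewrite sum_O; apply Ha|].
    rewrite sum_Sn. specialize (Ha (S n)). unfold plus; simpl. lra. }
  assert (Hincr : forall n, sum_n (fun k => Rabs (a k)) n <= sum_n (fun k => Rabs (a k)) (S n)).
  { intro n. rewrite sum_Sn. unfold plus; simpl. pose proof (Rabs_pos (a (S n))). lra. }
  destruct (ex_finite_lim_seq_incr _ (c 0%nat) Hincr) as [l Hl].
  { intro n. specialize (Hpart n). specialize (Hc (S n)). lra. }
  assert (Habs : is_series (fun k => Rabs (a k)) l) by exact Hl.
  split; [exists l; exact Habs|].
  eapply Rle_trans; [apply Series_Rabs; exists l; exact Habs|].
  rewrite (is_series_unique _ _ Habs).
  apply (is_lim_seq_le (sum_n (fun k => Rabs (a k))) (fun _ => c 0%nat) l (c 0%nat));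
    [|exact Hl | apply is_lim_seq_const].
  intro n. specialize (Hpart n). specialize (Hc (S n)). simpl. lra.
Qed.

Lemma is_series_telescoping (b : nat -> R) (L : R) :
  is_lim_seq b L -> is_series (fun k => b (S k) - b k) (L - b 0%nat).
Proof.
  intros Hb.
  enough (H : is_lim_seq (sum_n (fun k => b (S k) - b k)) (L - b 0%nat)) by exact H.
  apply (is_lim_seq_ext (fun n => b (S n) - b 0%nat)).
  - induction n as [|n IH]; [rewrite sum_O; reflexivity|].
    rewrite sum_Sn, <- IH. unfold plus; simpl. ring.
  - apply is_lim_seq_minus'; [apply (is_lim_seq_incr_1 b L), Hb | apply is_lim_seq_const].
Qed.

Lemma series_telescoping_error (a b e : nat -> R) (L : R) :
  (forall k, Rabs (a k - (b (S k) - b k)) <= e k - e (S k)) -> (forall k, 0 <= e k) ->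
  is_lim_seq b L -> ex_series a /\ Rabs (Series a - (L - b 0%nat)) <= e 0%nat.
Proof.
  intros Ha He Hb.
  set (d := fun k => a k - (b (S k) - b k)).
  destruct (series_le_telescoping d e Ha He) as [Hd Hd0].
  assert (Hsum : is_series a ((L - b 0%nat) + Series d)).
  { pose proof (is_series_plus _ _ _ _ (is_series_telescoping b L Hb)
                  (Series_correct d (ex_series_Rabs d Hd))) as Hs.
    revert Hs. apply is_series_ext. intro k. unfold d, plus. simpl. ring. }
  split; [eexists; exact Hsum|].
  rewrite (is_series_unique _ _ Hsum). replace (L - b 0%nat + Series d - (L - b 0%nat))
    with (Series d) by ring. exact Hd0.
Qed.

Lemma Rdiv_one_plus_lt (A t eps : R) :
  0 <= A -> 0 < eps -> 0 <= t -> A / eps <= t -> A / (1 + t) < eps.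
Proof.
  intros HA He Ht Hbig. apply Rlt_div_l; [lra|].
  apply Rle_div_l in Hbig; [nra | exact He].
Qed.

Lemma Rabs_diff_le_derive (G g phi dphi : R -> R) (u v : R) : u <= v ->
  (forall t, u <= t <= v -> is_derive G t (g t)) ->
  (forall t, u <= t <= v -> is_derive phi t (dphi t)) ->
  (forall t, u <= t <= v -> Rabs (g t) <= dphi t) ->
  Rabs (G v - G u) <= phi v - phi u.
Proof.
  intros Huv HG Hphi Hb.
  destruct (Req_dec u v) as [<-|Hne]; [rewrite !Rminus_diag, Rabs_R0; lra|].
  assert (Hmin : Rmin u v = u) by (apply Rmin_left; lra).
  assert (Hmax : Rmax u v = v) by (apply Rmax_right; lra).
  assert (Hmvt : forall sg : R, exists c, u <= c <= v /\
            (G v + sg * phi v) - (G u + sg * phi u) = (g c + sg * dphi c) * (v - u)).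
  { intro sg.
    assert (Hd : forall t, u <= t <= v ->
              is_derive (fun t => G t + sg * phi t) t (g t + sg * dphi t)).
    { intros t Ht. apply (is_derive_plus G (fun t => sg * phi t)); [apply HG, Ht|].
      apply is_derive_scal, Hphi, Ht. }
    destruct (MVT_gen (fun t => G t + sg * phi t) u v (fun t => g t + sg * dphi t))
      as [c [Hc E]].
    - intros t Ht. rewrite Hmin, Hmax in Ht. apply Hd; lra.
    - intros t Ht. rewrite Hmin, Hmax in Ht. apply continuity_pt_filterlim.
      apply (ex_derive_continuous (fun t => G t + sg * phi t)). eexists. apply Hd, Ht.
    - rewrite Hmin, Hmax in Hc. exists c. split; [exact Hc | exact E]. }
  destruct (Hmvt (-1)) as [c1 [Hc1 E1]], (Hmvt 1) as [c2 [Hc2 E2]].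
  pose proof (proj1 (Rabs_le_between _ _) (Hb c1 Hc1)).
  pose proof (proj1 (Rabs_le_between _ _) (Hb c2 Hc2)).
  apply Rabs_le_between. split; nra.
Qed.

Lemma weighted_bound_nonneg (phi : R -> R) (A : R) :
  (forall t, (1 + Rabs t) ^ 2 * Rabs (phi t) <= A) -> 0 <= A.
Proof.
  intros H. eapply Rle_trans; [|apply (H 0)].
  apply Rmult_le_pos; [apply pow_le; pose proof (Rabs_pos 0) | apply Rabs_pos]; lra.
Qed.

Lemma is_lim_m_infty_of_opp (G : R -> R) (L : R) :
  is_lim (fun t => G (- t)) p_infty L -> is_lim G m_infty L.
Proof.
  intros H. apply (filterlim_ext (fun t => G (- - t))); [intro; now rewrite Ropp_involutive|].
  exact (filterlim_comp _ _ _ Ropp (fun t => G (- t)) _ _ _ (filterlim_Rbar_opp m_infty) H).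
Qed.

Lemma le_div_of_weighted_bound (t X A : R) :
  0 <= t -> (1 + Rabs t) ^ 2 * X <= A -> X <= A / (1 + t) ^ 2.
Proof.
  intros Ht H. rewrite Rabs_pos_eq in H by lra.
  apply Rle_div_r; [apply pow_lt; lra | lra].
Qed.

Lemma weighted_increment_bound (G g : R -> R) (A : R) :
  (forall t, is_derive G t (g t)) -> (forall t, (1 + Rabs t) ^ 2 * Rabs (g t) <= A) ->
  forall u v, 0 <= u <= v -> Rabs (G v - G u) <= A / (1 + u) - A / (1 + v).
Proof.
  intros HG HA u v Huv.
  replace (A / (1 + u) - A / (1 + v)) with (- A / (1 + v) - - A / (1 + u)) by (field; lra).
  apply (Rabs_diff_le_derive G g (fun t => - A / (1 + t)) (fun t => A / (1 + t) ^ 2));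
    [lra | intros; apply HG | | intros t Ht; apply le_div_of_weighted_bound; [lra | apply HA]].
  intros t Ht. auto_derive; [lra | field; lra].
Qed.

Lemma ex_lim_p_infty_of_weighted_derive (G g : R -> R) (A : R) :
  (forall t, is_derive G t (g t)) -> (forall t, (1 + Rabs t) ^ 2 * Rabs (g t) <= A) ->
  exists L : R, is_lim G p_infty L.
Proof.
  intros HG HA. pose proof (weighted_bound_nonneg g A HA) as HA0.
  enough (H : exists L : R, filterlim G (Rbar_locally p_infty) (locally L))
    by (destruct H as [L H]; exists L; exact H).
  apply (filterlim_locally_cauchy (F := Rbar_locally p_infty) G). intro eps.
  pose proof (Rmax_l 0 (A / eps)). pose proof (Rmax_r 0 (A / eps)).
  set (M := Rmax 0 (A / eps)) in *.
  exists (fun t => M < t). split; [exists M; auto|].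
  intros u v Hu Hv.
  assert (Hsmall : forall w, M <= w -> A / (1 + w) < eps).
  { intros w Hw. apply Rdiv_one_plus_lt; [exact HA0 | apply cond_pos | lra | lra]. }
  assert (Hpos : forall w, M <= w -> 0 <= A / (1 + w)).
  { intros w Hw. apply Rdiv_le_0_compat; lra. }
  change (Rabs (G v - G u) < eps).
  destruct (Rle_dec u v).
  - pose proof (weighted_increment_bound G g A HG HA u v ltac:(lra)).
    pose proof (Hsmall u ltac:(lra)). pose proof (Hpos v ltac:(lra)). lra.
  - rewrite Rabs_minus_sym.
    pose proof (weighted_increment_bound G g A HG HA v u ltac:(lra)).
    pose proof (Hsmall v ltac:(lra)). pose proof (Hpos u ltac:(lra)). lra.
Qed.

Lemma is_lim_p_infty_of_weighted_bound (phi : R -> R) (A : R) :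
  (forall t, (1 + Rabs t) ^ 2 * Rabs (phi t) <= A) ->
  is_lim phi p_infty 0.
Proof.
  intros HA. pose proof (weighted_bound_nonneg phi A HA) as HA0.
  apply (filterlim_locally (F := Rbar_locally p_infty)). intro eps.
  exists (Rmax 0 (A / eps)). intros t Ht.
  pose proof (Rmax_l 0 (A / eps)). pose proof (Rmax_r 0 (A / eps)).
  change (Rabs (phi t - 0) < eps). rewrite Rminus_0_r.
  apply Rle_lt_trans with (A / (1 + t)).
  - apply Rle_trans with (A / (1 + t) ^ 2); [apply le_div_of_weighted_bound; [lra | apply HA]|].
    apply Rmult_le_compat_l; [exact HA0|]. apply Rinv_le_contravar; [lra|]. nra.
  - apply Rdiv_one_plus_lt; [exact HA0 | apply cond_pos | lra | lra].
Qed.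

Lemma weight_half_shift (p c X : R) : Rabs (p - c) <= 1 / 2 -> 0 <= X ->
  (1 + Rabs c) ^ 2 * X <= 4 * ((1 + Rabs p) ^ 2 * X).
Proof.
  intros Hpc HX.
  pose proof (Rabs_triang_inv c p). rewrite Rabs_minus_sym in Hpc.
  pose proof (Rabs_pos c). pose proof (Rabs_pos p).
  assert ((1 + Rabs c) ^ 2 <= 4 * (1 + Rabs p) ^ 2) by (simpl; nra).
  nra.
Qed.

Lemma is_lim_m_infty_of_weighted_bound (phi : R -> R) (A : R) :
  (forall t, (1 + Rabs t) ^ 2 * Rabs (phi t) <= A) -> is_lim phi m_infty 0.
Proof.
  intros HA. apply is_lim_m_infty_of_opp, (is_lim_p_infty_of_weighted_bound _ A).
  intro t. rewrite <- (Rabs_Ropp t). apply HA.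
Qed.

Definition weight (h : R) (k : nat) : R := 1 / (1 + INR k * h).

Lemma weight_nonneg (h : R) (k : nat) : 0 <= h -> 0 <= weight h k.
Proof. intros Hh. pose proof (pos_INR k). apply Rdiv_le_0_compat; nra. Qed.

Lemma weight_step_bound (h K X c : R) (k : nat) :
  0 < h <= 1 -> 0 <= X -> INR k * h <= Rabs c -> (1 + Rabs c) ^ 2 * X <= K ->
  X <= 2 * K / h * (weight h k - weight h (S k)).
Proof.
  intros Hh HX Hc HK. unfold weight. rewrite S_INR.
  set (t := INR k * h) in *. pose proof (pos_INR k). assert (Ht : 0 <= t) by (unfold t; nra).
  replace (2 * K / h * (1 / (1 + t) - 1 / (1 + (INR k + 1) * h)))
    with (2 * K / ((1 + t) * (1 + t + h))) by (unfold t; field; nra).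
  assert (HX' : (1 + t) ^ 2 * X <= K).
  { eapply Rle_trans; [|exact HK]. apply Rmult_le_compat_r; [exact HX|].
    apply pow_incr. lra. }
  apply Rle_div_r; [nra|].
  assert (X * ((1 + t) * (1 + t + h)) <= 2 * ((1 + t) ^ 2 * X)).
  { assert (0 <= X * (1 + t) * (1 + t - h)) by (apply Rmult_le_pos; [apply Rmult_le_pos|]; lra).
    simpl. nra. }
  lra.
Qed.

Lemma is_lim_seq_affine_INR (a h : R) : 0 < h -> is_lim_seq (fun k => (INR k + a) * h) p_infty.
Proof.
  intros Hh. eapply is_lim_seq_mult;
    [eapply is_lim_seq_plus; [apply is_lim_seq_INR | apply is_lim_seq_const | reflexivity]
    |apply is_lim_seq_const|].
  apply is_Rbar_mult_p_infty_pos. exact Hh.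
Qed.

Definition grid_sum (phi : R -> R) (h : R) : R := h * zsum (fun k => phi (IZR k * h)).

Lemma remainder_combination_bound (W A a b d e : R) : 0 <= W ->
  W * Rabs a <= 4 * A -> W * Rabs b <= 4 * A -> W * Rabs d <= 4 * A -> W * Rabs e <= 4 * A ->
  W * Rabs (- (a + b) / 3840 + (d + e) / 1152) <= A.
Proof.
  intros HW Ha Hb Hd He.
  assert (Hsum : Rabs (- (a + b) / 3840 + (d + e) / 1152)
                 <= (Rabs a + Rabs b) / 3840 + (Rabs d + Rabs e) / 1152).
  { eapply Rle_trans; [apply Rabs_triang|]. unfold Rdiv.
    rewrite !Rabs_mult, Rabs_Ropp, !(Rabs_pos_eq (/ _)) by lra.
    pose proof (Rabs_triang a b). pose proof (Rabs_triang d e). lra. }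
  apply Rmult_le_compat_l with (r := W) in Hsum; [|exact HW].
  pose proof (Rmult_le_pos _ _ HW (Rabs_pos a)).
  lra.
Qed.

Section Quadrature.
Variables (g : R -> R) (A : R).
Hypothesis g_smooth : smooth g.
Hypothesis g_decay : forall t, (1 + Rabs t) ^ 2 * Rabs (g t) <= A.
Hypothesis Dg_decay : forall t, (1 + Rabs t) ^ 2 * Rabs (Derive g t) <= A.
Hypothesis D4g_decay : forall t, (1 + Rabs t) ^ 2 * Rabs (Derive_n g 4 t) <= A.

Lemma g_continuous (t : R) : continuous g t.
Proof. exact (ex_derive_continuous g t (g_smooth 1%nat t)). Qed.

Definition primitive (t : R) : R := RInt g 0 t.

Lemma is_derive_primitive (t : R) : is_derive primitive t (g t).
Proof.
  apply (is_derive_RInt g primitive 0 t); [|apply g_continuous].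
  apply filter_forall. intro b. apply (RInt_correct (V := R_CompleteNormedModule)).
  apply (ex_RInt_continuous (V := R_CompleteNormedModule)). intros; apply g_continuous.
Qed.

Lemma Derive_n_primitive (m : nat) (t : R) : Derive_n primitive (S m) t = Derive_n g m t.
Proof.
  rewrite <- Nat.add_1_r, <- (Derive_n_comp primitive m 1%nat t).
  apply Derive_n_ext. intro. apply is_derive_unique, is_derive_primitive.
Qed.

Lemma smooth_primitive : smooth primitive.
Proof.
  intros [|[|k]] t; [exact I | eexists; apply is_derive_primitive|].
  apply (ex_derive_ext (Derive_n g k)); [intro; symmetry; apply Derive_n_primitive|].
  apply smooth_ex_derive, g_smooth.
Qed.

(* The [h ^ 2 / 24] correction removes the [h ^ 3] term of the midpoint rule on a
   cell, so that each cell contributes an error of order [h ^ 5]. *)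
Definition corrected_primitive (h t : R) : R := primitive t - h ^ 2 / 24 * Derive g t.

Lemma corrected_primitive_cell (c h : R) : 0 < h <= 1 ->
  (1 + Rabs c) ^ 2
  * Rabs (h * g c - (corrected_primitive h (c + h / 2) - corrected_primitive h (c - h / 2)))
  <= 4 * A * h ^ 5.
Proof.
  intros Hh.
  assert (Hs : Rabs (h / 2) <= 1 / 2) by (rewrite Rabs_pos_eq; lra).
  assert (Hs' : Rabs (- (h / 2)) <= 1 / 2) by (rewrite Rabs_Ropp; exact Hs).
  destruct (taylor_deg4 primitive c (h / 2) smooth_primitive) as [z1 [Hz1 E1]].
  destruct (taylor_deg4 primitive c (- (h / 2)) smooth_primitive) as [z2 [Hz2 E2]].
  destruct (taylor_deg2 (Derive g) c (h / 2) (smooth_Derive g g_smooth)) as [z3 [Hz3 E3]].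
  destruct (taylor_deg2 (Derive g) c (- (h / 2)) (smooth_Derive g g_smooth)) as [z4 [Hz4 E4]].
  rewrite !Derive_n_primitive in E1, E2. rewrite !Derive_n_Derive in E3, E4.
  unfold corrected_primitive. replace (c - h / 2) with (c + - (h / 2)) by ring.
  rewrite E1, E2, E3, E4.
  change (Derive_n g 0 c) with (g c). change (Derive g c) with (Derive_n g 1 c).
  set (W := (1 + Rabs c) ^ 2).
  assert (HW : 0 <= W) by (apply pow_le; pose proof (Rabs_pos c); lra).
  assert (Hrem : forall z, Rabs (z - c) <= 1 / 2 -> W * Rabs (Derive_n g 4 z) <= 4 * A).
  { intros z Hz. eapply Rle_trans; [apply weight_half_shift; [exact Hz | apply Rabs_pos]|].
    pose proof (D4g_decay z). lra. }
  pose proof (Hrem z1 ltac:(lra)) as B1. pose proof (Hrem z2 ltac:(lra)) as B2.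
  pose proof (Hrem z3 ltac:(lra)) as B3. pose proof (Hrem z4 ltac:(lra)) as B4.
  set (a := Derive_n g 4 z1) in *. set (b := Derive_n g 4 z2) in *.
  set (d := Derive_n g 4 z3) in *. set (e := Derive_n g 4 z4) in *.
  (* [(h / 2) ^ 5 / 5! = h ^ 5 / 3840] and [h ^ 2 / 24 * (h / 2) ^ 3 / 3! = h ^ 5 / 1152]. *)
  match goal with |- _ * Rabs ?X <= _ =>
    replace X with (h ^ 5 * (- (a + b) / 3840 + (d + e) / 1152)) by field end.
  rewrite Rabs_mult, (Rabs_pos_eq (h ^ 5)) by (apply pow_le; lra).
  replace (W * (h ^ 5 * Rabs (- (a + b) / 3840 + (d + e) / 1152)))
    with (h ^ 5 * (W * Rabs (- (a + b) / 3840 + (d + e) / 1152))) by ring.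
  pose proof (weighted_bound_nonneg g A g_decay).
  pose proof (remainder_combination_bound W A a b d e HW B1 B2 B3 B4).
  assert (0 <= h ^ 5) by (apply pow_le; lra).
  nra.
Qed.

Lemma primitive_limits : exists Lp Lm : R,
  is_lim primitive p_infty Lp /\ is_lim primitive m_infty Lm.
Proof.
  destruct (ex_lim_p_infty_of_weighted_derive primitive g A is_derive_primitive g_decay) as [Lp Hp].
  destruct (ex_lim_p_infty_of_weighted_derive (fun t => - primitive (- t)) (fun t => g (- t)) A)
    as [L HL].
  - intro t. auto_derive; [eexists; apply is_derive_primitive|].
    replace (Derive (fun x : R => primitive x) (- t)) with (g (- t))
      by (symmetry; apply is_derive_unique, is_derive_primitive).
    ring.
  - intro t. rewrite <- (Rabs_Ropp t). apply g_decay.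
  - exists Lp, (- L). split; [exact Hp|].
    apply is_lim_m_infty_of_opp.
    apply (filterlim_ext (fun t => - (- primitive (- t)))); [intro; ring|].
    apply (filterlim_comp _ _ _ _ Ropp _ _ _ HL), (filterlim_opp L).
Qed.

Lemma is_RInt_gen_primitive (Lp Lm : R) :
  is_lim primitive p_infty Lp -> is_lim primitive m_infty Lm ->
  is_RInt_gen g (Rbar_locally m_infty) (Rbar_locally p_infty) (Lp - Lm).
Proof.
  intros Hp Hm.
  apply (is_RInt_gen_ext (Derive primitive));
    [apply filter_forall; intros; apply is_derive_unique, is_derive_primitive|].
  apply is_RInt_gen_Derive; [| |exact Hm | exact Hp]; apply filter_forall; intros.
  - eexists; apply is_derive_primitive.
  - apply (continuous_ext g); [intro; symmetry; apply is_derive_unique, is_derive_primitive|].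
    apply g_continuous.
Qed.

Lemma is_lim_corrected_primitive (h : R) (x : Rbar) (L : R) :
  (x = p_infty \/ x = m_infty) ->
  is_lim primitive x L -> is_lim (corrected_primitive h) x L.
Proof.
  intros Hx HL. replace L with (L - h ^ 2 / 24 * 0) by ring.
  apply is_lim_minus'; [exact HL|]. apply (is_lim_scal_l _ _ _ 0).
  destruct Hx as [-> | ->];
    [apply (is_lim_p_infty_of_weighted_bound _ A) | apply (is_lim_m_infty_of_weighted_bound _ A)];
    exact Dg_decay.
Qed.

Lemma corrected_primitive_series (h : R) (c b : nat -> R) (L : R) : 0 < h <= 1 ->
  (forall k, INR k * h <= Rabs (c k)) ->
  (forall k, b (S k) - b k
             = corrected_primitive h (c k + h / 2) - corrected_primitive h (c k - h / 2)) ->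
  is_lim_seq b L ->
  ex_series (fun k => Rabs (g (c k))) /\
  Rabs (Series (fun k => h * g (c k)) - (L - b 0%nat)) <= 8 * A * h ^ 4.
Proof.
  intros Hh Hc Hb HL. pose proof (weighted_bound_nonneg g A g_decay) as HA.
  assert (Hw0 : weight h 0 = 1) by (unfold weight; simpl; field).
  split.
  - apply (series_le_telescoping _ (fun k => 2 * A / h * weight h k)).
    + intro k. rewrite <- Rmult_minus_distr_l.
      apply (weight_step_bound h A _ (c k)); [exact Hh | apply Rabs_pos | apply Hc | apply g_decay].
    + intro k. apply Rmult_le_pos; [apply Rdiv_le_0_compat; lra | apply weight_nonneg; lra].
  - replace (8 * A * h ^ 4) with (8 * A * h ^ 4 * weight h 0) by (rewrite Hw0; ring).
    apply (series_telescoping_error _ b (fun k => 8 * A * h ^ 4 * weight h k)); [| |exact HL].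
    + intro k. rewrite <- Rmult_minus_distr_l, Hb.
      replace (8 * A * h ^ 4) with (2 * (4 * A * h ^ 5) / h) by (field; lra).
      apply (weight_step_bound h _ _ (c k)); [exact Hh | apply Rabs_pos | apply Hc|].
      apply corrected_primitive_cell, Hh.
    + intro k. apply Rmult_le_pos; [|apply weight_nonneg; lra].
      apply Rmult_le_pos; [lra | apply pow_le; lra].
Qed.

Lemma grid_series_pos (h Lp : R) : 0 < h <= 1 -> is_lim primitive p_infty Lp ->
  ex_series (fun k => Rabs (g (INR k * h))) /\
  Rabs (Series (fun k => h * g (INR k * h)) - (Lp - corrected_primitive h (- h / 2)))
  <= 8 * A * h ^ 4.
Proof.
  intros Hh Hp.
  replace (- h / 2) with ((INR 0 + - (1 / 2)) * h) by (simpl; field).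
  apply (corrected_primitive_series h _
           (fun k => corrected_primitive h ((INR k + - (1 / 2)) * h)) Lp Hh).
  - intro k. apply Rle_abs.
  - intro k. rewrite S_INR. f_equal; f_equal; field.
  - apply (is_lim_comp_seq _ _ p_infty); [| exists 0%nat; intros; discriminate |].
    + apply is_lim_corrected_primitive; [left; reflexivity | exact Hp].
    + apply is_lim_seq_affine_INR; lra.
Qed.

Lemma grid_series_neg (h Lm : R) : 0 < h <= 1 -> is_lim primitive m_infty Lm ->
  ex_series (fun k => Rabs (g (- ((INR k + 1) * h)))) /\
  Rabs (Series (fun k => h * g (- ((INR k + 1) * h))) - (corrected_primitive h (- h / 2) - Lm))
  <= 8 * A * h ^ 4.
Proof.
  intros Hh Hm.
  replace (- h / 2) with (- ((INR 0 + 1 / 2) * h)) by (simpl; field).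
  replace (corrected_primitive h (- ((INR 0 + 1 / 2) * h)) - Lm)
    with (- Lm - - corrected_primitive h (- ((INR 0 + 1 / 2) * h))) by ring.
  apply (corrected_primitive_series h _
           (fun k => - corrected_primitive h (- ((INR k + 1 / 2) * h))) _ Hh).
  - intro k. rewrite Rabs_Ropp, Rabs_pos_eq by (pose proof (pos_INR k); nra). lra.
  - intro k. rewrite S_INR.
    replace (- ((INR k + 1) * h) + h / 2) with (- ((INR k + 1 / 2) * h)) by field.
    replace (- ((INR k + 1) * h) - h / 2) with (- ((INR k + 1 + 1 / 2) * h)) by field.
    ring.
  - apply (is_lim_seq_opp _ Lm), (is_lim_comp_seq _ _ m_infty);
      [| exists 0%nat; intros; discriminate |].
    + apply is_lim_corrected_primitive; [right; reflexivity | exact Hm].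
    + apply (is_lim_seq_opp _ p_infty), is_lim_seq_affine_INR; lra.
Qed.

Theorem grid_sum_error : exists I : R,
  is_RInt_gen g (Rbar_locally m_infty) (Rbar_locally p_infty) I /\
  forall h, 0 < h <= 1 ->
    zsummable (fun k => g (IZR k * h)) /\ Rabs (grid_sum g h - I) <= 16 * A * h ^ 4.
Proof.
  destruct primitive_limits as (Lp & Lm & Hp & Hm).
  exists (Lp - Lm). split; [apply is_RInt_gen_primitive; assumption|].
  intros h Hh.
  destruct (grid_series_pos h Lp Hh Hp) as [Sp Ep], (grid_series_neg h Lm Hh Hm) as [Sm Em].
  assert (Epos : forall k, IZR (Z.of_nat k) * h = INR k * h)
    by (intro; rewrite <- INR_IZR_INZ; reflexivity).
  assert (Eneg : forall k, IZR (- Z.of_nat k - 1) * h = - ((INR k + 1) * h))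
    by (intro; rewrite minus_IZR, opp_IZR, <- INR_IZR_INZ; ring).
  split; [split|].
  - revert Sp. apply ex_series_ext. intro k. now rewrite Epos.
  - revert Sm. apply ex_series_ext. intro k. now rewrite Eneg.
  - unfold grid_sum, zsum. rewrite Rmult_plus_distr_l, <- !Series_scal_l.
    rewrite (Series_ext _ (fun k => h * g (INR k * h))) by (intro; now rewrite Epos).
    rewrite (Series_ext (fun k => h * g (IZR (- Z.of_nat k - 1) * h))
               (fun k => h * g (- ((INR k + 1) * h)))) by (intro; now rewrite Eneg).
    match goal with |- Rabs (?S1 + ?S2 - _) <= _ =>
      replace (S1 + S2 - (Lp - Lm))
        with ((S1 - (Lp - corrected_primitive h (- h / 2)))
              + (S2 - (corrected_primitive h (- h / 2) - Lm))) by ring end.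
    eapply Rle_trans; [apply Rabs_triang|]. lra.
Qed.

End Quadrature.

Lemma schwartz_grid_sum_error (phi : R -> R) :
  smooth phi -> rapidly_decaying phi ->
  exists I K : R, 0 <= K /\
    is_RInt_gen phi (Rbar_locally m_infty) (Rbar_locally p_infty) I /\
    forall h, 0 < h <= 1 ->
      zsummable (fun k => phi (IZR k * h)) /\ Rabs (grid_sum phi h - I) <= K * h ^ 4.
Proof.
  intros Hs Hr.
  destruct (rapidly_decaying_weighted_bound phi 0 Hr) as [A0 H0].
  destruct (rapidly_decaying_weighted_bound phi 1 Hr) as [A1 H1].
  destruct (rapidly_decaying_weighted_bound phi 4 Hr) as [A4 H4].
  set (A := Rmax A0 (Rmax A1 A4)).
  assert (HA : forall n A' x, (1 + Rabs x) ^ 2 * Rabs (Derive_n phi n x) <= A' -> A' <= A ->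
                 (1 + Rabs x) ^ 2 * Rabs (Derive_n phi n x) <= A) by (intros; lra).
  assert (B0 : forall t, (1 + Rabs t) ^ 2 * Rabs (phi t) <= A)
    by (intro t; apply (HA 0%nat A0); [apply H0 | apply Rmax_l]).
  destruct (grid_sum_error phi A Hs B0) as [I [HI HS]].
  - intro t. apply (HA 1%nat A1); [apply H1|]. eapply Rle_trans; [apply Rmax_l | apply Rmax_r].
  - intro t. apply (HA 4%nat A4); [apply H4|]. eapply Rle_trans; [apply Rmax_r | apply Rmax_r].
  - exists I, (16 * A). pose proof (weighted_bound_nonneg phi A B0). split; [lra|]. auto.
Qed.

(** * Discrete and continuous moments *)

Lemma Rint_eq (phi : R -> R) (I : R) :
  is_RInt_gen phi (Rbar_locally m_infty) (Rbar_locally p_infty) I -> Rint phi = I.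
Proof. apply (is_RInt_gen_unique (V := R_CompleteNormedModule)). Qed.

Lemma is_RInt_gen_centered_square (f : R -> R) (u I0 I1 I2 : R) :
  is_RInt_gen f (Rbar_locally m_infty) (Rbar_locally p_infty) I0 ->
  is_RInt_gen (fun v => v * f v) (Rbar_locally m_infty) (Rbar_locally p_infty) I1 ->
  is_RInt_gen (fun v => v * (v * f v)) (Rbar_locally m_infty) (Rbar_locally p_infty) I2 ->
  is_RInt_gen (fun v => (v - u) ^ 2 * f v) (Rbar_locally m_infty) (Rbar_locally p_infty)
    (I2 - 2 * u * I1 + u ^ 2 * I0).
Proof.
  intros H0 H1 H2.
  pose proof (is_RInt_gen_plus _ _ _ _
               (is_RInt_gen_plus _ _ _ _ H2 (is_RInt_gen_scal _ (- 2 * u) _ H1))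
               (is_RInt_gen_scal _ (u ^ 2) _ H0)) as H.
  replace (I2 - 2 * u * I1 + u ^ 2 * I0) with (plus (plus I2 (scal (- 2 * u) I1)) (scal (u ^ 2) I0))
    by (unfold plus, scal; simpl; unfold mult; simpl; ring).
  revert H. apply is_RInt_gen_ext, filter_forall. intros ab x _.
  unfold plus, scal; simpl; unfold mult; simpl. ring.
Qed.

Lemma ratio_error (S0 I0 S I K0 K e : R) : 0 < I0 -> 0 <= e ->
  Rabs (S0 - I0) <= K0 * e -> K0 * e <= I0 / 2 -> Rabs (S - I) <= K * e ->
  Rabs (S / S0 - I / I0) <= e * (2 * (K * I0 + Rabs I * K0) / I0 ^ 2).
Proof.
  intros HI0 He H0 Hsmall H.
  assert (HS0 : I0 / 2 <= S0) by (apply Rabs_le_between in H0; lra).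
  replace (S / S0 - I / I0) with (((S - I) * I0 - I * (S0 - I0)) / (S0 * I0)) by (field; lra).
  unfold Rdiv at 1. rewrite Rabs_mult, Rabs_inv, (Rabs_pos_eq (S0 * I0)) by nra.
  assert (N : Rabs ((S - I) * I0 - I * (S0 - I0)) <= e * (K * I0 + Rabs I * K0)).
  { eapply Rle_trans; [apply Rabs_triang|]. rewrite Rabs_Ropp, !Rabs_mult, (Rabs_pos_eq I0) by lra.
    pose proof (Rabs_pos I).
    assert (Rabs (S - I) * I0 <= K * e * I0) by (apply Rmult_le_compat_r; lra).
    assert (Rabs I * Rabs (S0 - I0) <= Rabs I * (K0 * e)) by (apply Rmult_le_compat_l; lra).
    nra. }
  apply Rle_trans with (e * (K * I0 + Rabs I * K0) * / (S0 * I0)).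
  - apply Rmult_le_compat_r; [apply Rlt_le, Rinv_0_lt_compat; nra | exact N].
  - replace (e * (2 * (K * I0 + Rabs I * K0) / I0 ^ 2))
      with (e * (K * I0 + Rabs I * K0) * / (I0 ^ 2 / 2)) by (field; lra).
    apply Rmult_le_compat_l; [eapply Rle_trans; [apply Rabs_pos | exact N]|].
    apply Rinv_le_contravar; [simpl; nra | simpl; nra].
Qed.

Lemma moment_grid (f : R -> R) (dv : R) (i : nat) (k : Z) : dv <> 0 ->
  moment (fun k => f (vj dv k)) i k = / dv ^ i * ((IZR k * dv) ^ i * f (IZR k * dv)).
Proof. intros Hdv. unfold moment, vj. rewrite Rpow_mult_distr. field. apply pow_nonzero, Hdv. Qed.

Lemma grid_moments (f : R -> R) (dv : R) : dv <> 0 ->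
  zsummable (fun k => f (IZR k * dv)) ->
  zsummable (fun k => IZR k * dv * f (IZR k * dv)) ->
  zsummable (fun k => IZR k * dv * (IZR k * dv * f (IZR k * dv))) ->
  grid_sum f dv <> 0 ->
  (forall i, (i <= 2)%nat -> zsummable (moment (fun k => f (vj dv k)) i)) /\
  zsum (moment (fun k => f (vj dv k)) 0) <> 0 /\
  ubreve dv (fun k => f (vj dv k)) = grid_sum (fun v => v * f v) dv / grid_sum f dv /\
  Tbreve dv (fun k => f (vj dv k))
  = grid_sum (fun v => v * (v * f v)) dv / grid_sum f dv - ubreve dv (fun k => f (vj dv k)) ^ 2.
Proof.
  intros Hdv Z0 Z1 Z2 HS0. set (F := fun k => f (vj dv k)).
  assert (M0 : forall k, moment F 0 k = f (IZR k * dv))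
    by (intro; unfold F; rewrite moment_grid by exact Hdv; simpl; field).
  assert (M1 : forall k, moment F 1 k = / dv * (IZR k * dv * f (IZR k * dv)))
    by (intro; unfold F; rewrite moment_grid by exact Hdv; simpl; field; exact Hdv).
  assert (M2 : forall k, moment F 2 k = / dv ^ 2 * (IZR k * dv * (IZR k * dv * f (IZR k * dv))))
    by (intro; unfold F; rewrite moment_grid by exact Hdv; simpl; field; exact Hdv).
  assert (Hsum : forall i, (i <= 2)%nat -> zsummable (moment F i)).
  { intros [|[|[|i]]] Hi; try lia.
    - apply (zsummable_ext _ _ (fun k => eq_sym (M0 k))), Z0.
    - apply (zsummable_ext _ _ (fun k => eq_sym (M1 k))), zsummable_scal, Z1.
    - apply (zsummable_ext _ _ (fun k => eq_sym (M2 k))), zsummable_scal, Z2. }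
  unfold grid_sum in *.
  assert (Hm0 : zsum (moment F 0) = dv * zsum (fun k => f (IZR k * dv)) / dv)
    by (rewrite (zsum_ext _ _ M0); field; exact Hdv).
  assert (Hm1 : zsum (moment F 1) = dv * zsum (fun k => IZR k * dv * f (IZR k * dv)) / dv ^ 2)
    by (rewrite (zsum_ext _ _ M1), zsum_scal; field; exact Hdv).
  assert (Hm2 : zsum (moment F 2)
                = dv * zsum (fun k => IZR k * dv * (IZR k * dv * f (IZR k * dv))) / dv ^ 3)
    by (rewrite (zsum_ext _ _ M2), zsum_scal; field; exact Hdv).
  assert (Hm0n : zsum (moment F 0) <> 0).
  { rewrite Hm0. apply Rmult_integral_contrapositive_currified; [exact HS0|].
    apply Rinv_neq_0_compat, Hdv. }
  assert (Hz0 : zsum (fun k => f (IZR k * dv)) <> 0) by (intro E; apply HS0; rewrite E; ring).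
  split; [exact Hsum|]. split; [exact Hm0n|].
  assert (Hub : ubreve dv F = dv * zsum (fun k => IZR k * dv * f (IZR k * dv))
                              / (dv * zsum (fun k => f (IZR k * dv))))
    by (rewrite ubreve_moment, Hm1, Hm0 by assumption; field; split; assumption).
  split; [exact Hub|].
  rewrite Tbreve_moment, Hm2, Hm0 by assumption. field. split; assumption.
Qed.

Lemma continuous_moments (f : R -> R) (I0 I1 I2 : R) :
  is_RInt_gen f (Rbar_locally m_infty) (Rbar_locally p_infty) I0 ->
  is_RInt_gen (fun v => v * f v) (Rbar_locally m_infty) (Rbar_locally p_infty) I1 ->
  is_RInt_gen (fun v => v * (v * f v)) (Rbar_locally m_infty) (Rbar_locally p_infty) I2 ->
  I0 <> 0 ->
  nf f = I0 /\ uf f = I1 / I0 /\ Tf f = I2 / I0 - uf f ^ 2.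
Proof.
  intros HI0 HI1 HI2 HI0n.
  assert (En : nf f = I0) by (apply Rint_eq, HI0).
  assert (Eu : uf f = I1 / I0) by (unfold uf; rewrite En; f_equal; apply Rint_eq, HI1).
  split; [exact En|]. split; [exact Eu|].
  transitivity ((I2 - 2 * uf f * I1 + uf f ^ 2 * I0) / I0).
  - unfold Tf at 1. rewrite En. f_equal. apply Rint_eq, is_RInt_gen_centered_square; assumption.
  - rewrite Eu. field. exact HI0n.
Qed.

Lemma variance_error (S I a b e Ca C2 : R) : 0 <= e <= 1 -> 0 <= Ca ->
  Rabs (S - I) <= e * C2 -> Rabs (a - b) <= e * Ca ->
  Rabs ((S - a ^ 2) - (I - b ^ 2)) <= (C2 + Ca * (2 * Rabs b + Ca)) * e.
Proof.
  intros He HCa HS Hab.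
  replace ((S - a ^ 2) - (I - b ^ 2)) with ((S - I) - (a - b) * (a + b)) by ring.
  assert (Hplus : Rabs (a + b) <= Ca + 2 * Rabs b).
  { replace (a + b) with ((a - b) + 2 * b) by ring.
    eapply Rle_trans; [apply Rabs_triang|]. rewrite Rabs_mult, (Rabs_pos_eq 2) by lra. nra. }
  eapply Rle_trans; [apply Rabs_triang|]. rewrite Rabs_Ropp, Rabs_mult.
  assert (Rabs (a - b) * Rabs (a + b) <= e * Ca * (Ca + 2 * Rabs b))
    by (apply Rmult_le_compat; auto using Rabs_pos).
  nra.
Qed.

Lemma small_mesh (I0 K0 : R) : 0 < I0 -> 0 <= K0 ->
  exists delta, 0 < delta <= 1 /\
    forall dv, 0 < dv < delta -> 0 < dv ^ 4 <= 1 /\ K0 * dv ^ 4 <= I0 / 2.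
Proof.
  intros HI0 HK0. exists (Rmin 1 (I0 / (2 * (K0 + 1)))).
  pose proof (Rmin_l 1 (I0 / (2 * (K0 + 1)))). pose proof (Rmin_r 1 (I0 / (2 * (K0 + 1)))).
  split; [split; [apply Rmin_glb_lt; [lra | apply Rdiv_lt_0_compat; lra] | assumption]|].
  intros dv Hdv.
  assert (Hdv4 : dv ^ 4 <= dv).
  { assert (dv ^ 3 <= 1) by (rewrite <- (pow1 3); apply pow_incr; lra).
    replace (dv ^ 4) with (dv * dv ^ 3) by ring. nra. }
  split; [split; [apply pow_lt|]; lra|].
  apply Rle_trans with (K0 * dv); [apply Rmult_le_compat_l; lra|].
  assert (dv * (2 * (K0 + 1)) < I0) by (apply Rlt_div_r; lra).
  nra.
Qed.

Lemma grid_moments_error (f : R -> R) :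
  smooth f -> rapidly_decaying f -> 0 < nf f ->
  exists Cu CT delta : R, 0 < delta <= 1 /\
    forall dv, 0 < dv < delta ->
      (forall i, (i <= 2)%nat -> zsummable (moment (fun k => f (vj dv k)) i)) /\
      zsum (moment (fun k => f (vj dv k)) 0) <> 0 /\
      Rabs (ubreve dv (fun k => f (vj dv k)) - uf f) <= Cu * dv ^ 4 /\
      Rabs (Tbreve dv (fun k => f (vj dv k)) - Tf f) <= CT * dv ^ 4.
Proof.
  intros Hs Hr Hn.
  pose proof (smooth_mul_id f Hs) as Hs1. pose proof (rapidly_decaying_mul_id f Hs Hr) as Hr1.
  pose proof (smooth_mul_id _ Hs1) as Hs2. pose proof (rapidly_decaying_mul_id _ Hs1 Hr1) as Hr2.
  destruct (schwartz_grid_sum_error f Hs Hr) as (I0 & K0 & HK0 & HI0 & HS0).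
  destruct (schwartz_grid_sum_error _ Hs1 Hr1) as (I1 & K1 & HK1 & HI1 & HS1).
  destruct (schwartz_grid_sum_error _ Hs2 Hr2) as (I2 & K2 & HK2 & HI2 & HS2).
  assert (HI0pos : 0 < I0) by (rewrite <- (Rint_eq _ _ HI0); exact Hn).
  destruct (continuous_moments f I0 I1 I2 HI0 HI1 HI2 ltac:(lra)) as (_ & Eu & ET).
  set (Cu := 2 * (K1 * I0 + Rabs I1 * K0) / I0 ^ 2).
  set (C2 := 2 * (K2 * I0 + Rabs I2 * K0) / I0 ^ 2).
  assert (HCu : 0 <= Cu)
    by (apply Rdiv_le_0_compat; [pose proof (Rabs_pos I1); nra | apply pow_lt; lra]).
  assert (HC2 : 0 <= C2)
    by (apply Rdiv_le_0_compat; [pose proof (Rabs_pos I2); nra | apply pow_lt; lra]).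
  destruct (small_mesh I0 K0 HI0pos HK0) as (delta & Hdelta & Hsmall).
  exists Cu, (C2 + Cu * (2 * Rabs (uf f) + Cu)), delta. split; [exact Hdelta|].
  intros dv Hdv. destruct (Hsmall dv Hdv) as (Hdv4 & HK0dv).
  assert (Hh : 0 < dv <= 1) by lra.
  destruct (HS0 dv Hh) as [Z0 E0], (HS1 dv Hh) as [Z1 E1], (HS2 dv Hh) as [Z2 E2].
  assert (HS0pos : I0 / 2 <= grid_sum f dv) by (apply Rabs_le_between in E0; lra).
  destruct (grid_moments f dv ltac:(lra) Z0 Z1 Z2 ltac:(lra)) as (Hsum & Hm0n & Hub & HTb).
  set (F := fun k => f (vj dv k)) in *.
  assert (Eub : Rabs (ubreve dv F - uf f) <= dv ^ 4 * Cu)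
    by (rewrite Hub, Eu; apply (ratio_error _ I0 _ I1 K0 K1); lra).
  assert (E2r : Rabs (grid_sum (fun v => v * (v * f v)) dv / grid_sum f dv - I2 / I0)
                <= dv ^ 4 * C2)
    by (apply (ratio_error _ I0 _ I2 K0 K2); lra).
  split; [exact Hsum|]. split; [exact Hm0n|]. split; [lra|].
  rewrite HTb, ET. apply variance_error; lra.
Qed.

(** * Local consistency *)

Definition Q4_local (dv ub Tb ut Tt x fm2 fm1 f0 f1 f2 : R) : R :=
  let fb0 := - (1/16) * fm1 + (9/16) * f0 + (9/16) * f1 - (1/16) * f2 in
  let fbm1 := - (1/16) * fm2 + (9/16) * fm1 + (9/16) * f0 - (1/16) * f1 in
  let Qb := ((x + dv / 2 - ub) * fb0 - (x - dv / 2 - ub) * fbm1) / dv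
            + Tb * (- fm2 + 28 * fm1 - 54 * f0 + 28 * f1 - f2) / (24 * dv ^ 2) in
  let Q2p := / dv * ((f2 + f1) / 2 * (x + 3 * dv / 2 - ut) - (f1 + f0) / 2 * (x + dv / 2 - ut))
             + Tt / dv ^ 2 * (f2 - 2 * f1 + f0) in
  let Q20 := / dv * ((f1 + f0) / 2 * (x + dv / 2 - ut) - (f0 + fm1) / 2 * (x - dv / 2 - ut))
             + Tt / dv ^ 2 * (f1 - 2 * f0 + fm1) in
  let Q2m := / dv * ((f0 + fm1) / 2 * (x - dv / 2 - ut) - (fm1 + fm2) / 2 * (x - 3 * dv / 2 - ut))
             + Tt / dv ^ 2 * (f0 - 2 * fm1 + fm2) in
  Qb - / 24 * (Q2p - 2 * Q20 + Q2m).

Ltac normalize_Z_args F :=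
  repeat match goal with |- context [F ?z] => progress (ring_simplify z) end;
  repeat match goal with |- context [IZR ?z] => progress (ring_simplify z) end;
  rewrite ?plus_IZR, ?minus_IZR.

Lemma Q4_local_eq (dv : R) (F : Z -> R) (j : Z) : dv <> 0 ->
  Q4 dv F j = Q4_local dv (ubreve dv F) (Tbreve dv F) (utilde dv F) (Ttilde dv F) (IZR j * dv)
                (F (j - 2)%Z) (F (j - 1)%Z) (F j) (F (j + 1)%Z) (F (j + 2)%Z).
Proof.
  intros Hdv.
  unfold Q4, Qbar4, Q2, fbreve, fmid, vhalf, vj, Q4_local. cbv zeta.
  generalize (ubreve dv F) (Tbreve dv F) (utilde dv F) (Ttilde dv F). intros ub Tb ut Tt.
  normalize_Z_args F. field. exact Hdv.
Qed.

Fixpoint sum_products (h : R) (L : list (R * nat * R * R)) : R :=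
  match L with
  | [] => 0
  | (c, e, p, d) :: L' => c * h ^ e * p * d + sum_products h L'
  end.

Fixpoint coef_norm (L : list (R * nat * R * R)) : R :=
  match L with
  | [] => 0
  | (c, _, _, _) :: L' => Rabs c + coef_norm L'
  end.

Fixpoint factors_le (B : R) (L : list (R * nat * R * R)) : Prop :=
  match L with
  | [] => True
  | (_, _, p, d) :: L' => Rabs p <= B /\ Rabs d <= B /\ factors_le B L'
  end.

Lemma Rabs_pow_le_1 (h : R) (e : nat) : Rabs h <= 1 -> Rabs (h ^ e) <= 1.
Proof.
  intros Hh. rewrite <- RPow_abs. rewrite <- (pow1 e).
  apply pow_incr. split; [apply Rabs_pos | exact Hh].
Qed.

Lemma sum_products_bound (h B : R) (L : list (R * nat * R * R)) :
  Rabs h <= 1 -> 0 <= B -> factors_le B L -> Rabs (sum_products h L) <= coef_norm L * B ^ 2.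
Proof.
  intros Hh HB. induction L as [|[[[c e] p] d] L IH]; simpl; [rewrite Rabs_R0; lra|].
  intros (Hp & Hd & HL).
  eapply Rle_trans; [apply Rabs_triang|].
  rewrite Rmult_plus_distr_r. apply Rplus_le_compat; [|exact (IH HL)].
  rewrite !Rabs_mult. pose proof (Rabs_pow_le_1 h e Hh).
  pose proof (Rabs_pos c). pose proof (Rabs_pos (h ^ e)).
  pose proof (Rabs_pos p). pose proof (Rabs_pos d).
  assert (Rabs c * Rabs (h ^ e) <= Rabs c) by nra.
  assert (Rabs p * Rabs d <= B * B) by nra.
  replace (Rabs c * Rabs (h ^ e) * Rabs p * Rabs d)
    with ((Rabs c * Rabs (h ^ e)) * (Rabs p * Rabs d)) by ring.
  replace (Rabs c * B ^ 2) with (Rabs c * (B * B)) by ring.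
  apply Rmult_le_compat; nra.
Qed.

Definition taylor5_at (h D0 D1 D2 D3 D4 D5 r k : R) : R :=
  D0 + (k * h) * D1 + (k * h) ^ 2 / 2 * D2 + (k * h) ^ 3 / 6 * D3 + (k * h) ^ 4 / 24 * D4
  + (k * h) ^ 5 / 120 * D5 + h ^ 6 * r.

(* All factors stay bounded as [h -> 0], including the scaled moment errors
   [(ub - u) / h ^ 4], [(Tb - T) / h ^ 4] and the sixth-order Taylor remainders [r]. *)
Definition Q4_error_terms (h u T ub Tb x D1 D2 D4 D5 rm2 rm1 r1 r2 : R)
  : list (R * nat * R * R) :=
  [(-7 / 96, 0%nat, 1, D4);
   (1, 0%nat, (Tb - T) / h ^ 4, D2);
   (-1, 0%nat, (ub - u) / h ^ 4, D1);
   (-1 / 12, 0%nat, T, r2); (4 / 3, 0%nat, T, r1);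
   (4 / 3, 0%nat, T, rm1); (-1 / 12, 0%nat, T, rm2);
   (1 / 30, 0%nat, u, D5);
   (1 / 12, 1%nat, u, r2); (-2 / 3, 1%nat, u, r1);
   (2 / 3, 1%nat, u, rm1); (-1 / 12, 1%nat, u, rm2);
   (-7 / 96, 2%nat, 1, r2); (7 / 24, 2%nat, 1, r1);
   (7 / 24, 2%nat, 1, rm1); (-7 / 96, 2%nat, 1, rm2);
   (-1 / 12, 4%nat, (Tb - T) / h ^ 4, r2); (4 / 3, 4%nat, (Tb - T) / h ^ 4, r1);
   (4 / 3, 4%nat, (Tb - T) / h ^ 4, rm1); (-1 / 12, 4%nat, (Tb - T) / h ^ 4, rm2);
   (1 / 30, 4%nat, (ub - u) / h ^ 4, D5);
   (1 / 12, 5%nat, (ub - u) / h ^ 4, r2); (-2 / 3, 5%nat, (ub - u) / h ^ 4, r1);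
   (2 / 3, 5%nat, (ub - u) / h ^ 4, rm1); (-1 / 12, 5%nat, (ub - u) / h ^ 4, rm2);
   (-1 / 30, 0%nat, 1, x * D5);
   (-1 / 12, 1%nat, 1, x * r2); (2 / 3, 1%nat, 1, x * r1);
   (-2 / 3, 1%nat, 1, x * rm1); (1 / 12, 1%nat, 1, x * rm2)].

Lemma Q4_local_taylor (h u T ub Tb x D0 D1 D2 D3 D4 D5 rm2 rm1 r1 r2 : R) : h <> 0 ->
  Q4_local h ub Tb ub (Tb + h ^ 2 / 4) x
    (taylor5_at h D0 D1 D2 D3 D4 D5 rm2 (-2)) (taylor5_at h D0 D1 D2 D3 D4 D5 rm1 (-1))
    D0 (taylor5_at h D0 D1 D2 D3 D4 D5 r1 1) (taylor5_at h D0 D1 D2 D3 D4 D5 r2 2)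
  - (D0 + (x - u) * D1 + T * D2)
  = h ^ 4 * sum_products h (Q4_error_terms h u T ub Tb x D1 D2 D4 D5 rm2 rm1 r1 r2).
Proof. intros Hh. unfold Q4_local, taylor5_at, Q4_error_terms. simpl. field. exact Hh. Qed.

Lemma taylor5_grid (f : R -> R) (x h k c6 c61 : R) :
  smooth f -> 0 < h <= 1 -> Rabs k <= 2 ->
  (forall y, Rabs (Derive_n f 6 y) <= c6) -> (forall y, Rabs (y * Derive_n f 6 y) <= c61) ->
  exists r, f (x + k * h)
            = taylor5_at h (f x) (Derive_n f 1 x) (Derive_n f 2 x) (Derive_n f 3 x)
                (Derive_n f 4 x) (Derive_n f 5 x) r k
         /\ Rabs r <= c6 /\ Rabs (x * r) <= c61 + 2 * c6.
Proof.
  intros Hs Hh Hk H6 Hx6.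
  destruct (taylor_deg5 f x (k * h) Hs) as [z [Hz E]].
  exists (k ^ 6 / 720 * Derive_n f 6 z). split; [rewrite E; unfold taylor5_at; field|].
  assert (Hzx : Rabs (z - x) <= 2) by (rewrite Rabs_mult, (Rabs_pos_eq h) in Hz; nra).
  assert (Hk6 : Rabs (k ^ 6 / 720) <= 1).
  { rewrite Rabs_div, <- RPow_abs, (Rabs_pos_eq 720) by lra. apply Rle_div_l; [lra|].
    apply Rle_trans with (2 ^ 6); [apply pow_incr; split; [apply Rabs_pos | exact Hk] | lra]. }
  assert (Hxz : Rabs x * Rabs (Derive_n f 6 z) <= c61 + 2 * c6).
  { pose proof (Rabs_triang_inv x z). rewrite Rabs_minus_sym in Hzx.
    specialize (Hx6 z). rewrite Rabs_mult in Hx6. pose proof (H6 z).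
    pose proof (Rabs_pos (Derive_n f 6 z)). nra. }
  pose proof (Rabs_pos (k ^ 6 / 720)). pose proof (Rabs_pos (Derive_n f 6 z)).
  pose proof (H6 z). pose proof (Rabs_pos x).
  rewrite !Rabs_mult. split; [nra|].
  replace (Rabs x * (Rabs (k ^ 6 / 720) * Rabs (Derive_n f 6 z)))
    with (Rabs (k ^ 6 / 720) * (Rabs x * Rabs (Derive_n f 6 z))) by ring.
  assert (0 <= Rabs x * Rabs (Derive_n f 6 z)) by nra.
  nra.
Qed.

Lemma Rabs_div_pow4_le (a h K : R) : 0 < h -> Rabs a <= K * h ^ 4 -> Rabs (a / h ^ 4) <= K.
Proof.
  intros Hh H. assert (0 < h ^ 4) by (apply pow_lt; lra).
  rewrite Rabs_div, (Rabs_pos_eq (h ^ 4)) by lra. apply Rle_div_l; lra.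
Qed.

Lemma rapidly_decaying_bounds (f : R -> R) (n : nat) : rapidly_decaying f ->
  exists c, forall x, Rabs (Derive_n f n x) <= c /\ Rabs (x * Derive_n f n x) <= c.
Proof.
  intros Hr. destruct (Hr n 0%nat) as [c0 H0], (Hr n 1%nat) as [c1 H1].
  exists (Rmax c0 c1). intro x. specialize (H0 x). specialize (H1 x). simpl in H0, H1.
  rewrite Rabs_mult. pose proof (Rmax_l c0 c1). pose proof (Rmax_r c0 c1). split; lra.
Qed.

Lemma Q4_local_taylor_bound (h u T ub Tb x D0 D1 D2 D3 D4 D5 rm2 rm1 r1 r2 B : R) :
  0 < h <= 1 -> 0 <= B ->
  factors_le B (Q4_error_terms h u T ub Tb x D1 D2 D4 D5 rm2 rm1 r1 r2) ->
  Rabs (Q4_local h ub Tb ub (Tb + h ^ 2 / 4) x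
          (taylor5_at h D0 D1 D2 D3 D4 D5 rm2 (-2)) (taylor5_at h D0 D1 D2 D3 D4 D5 rm1 (-1))
          D0 (taylor5_at h D0 D1 D2 D3 D4 D5 r1 1) (taylor5_at h D0 D1 D2 D3 D4 D5 r2 2)
        - (D0 + (x - u) * D1 + T * D2))
  <= coef_norm (Q4_error_terms 0 0 0 0 0 0 0 0 0 0 0 0 0 0) * B ^ 2 * h ^ 4.
Proof.
  intros Hh HB Hfac. rewrite Q4_local_taylor by lra.
  rewrite Rabs_mult, (Rabs_pos_eq (h ^ 4)), (Rmult_comm _ (h ^ 4)) by (apply pow_le; lra).
  apply Rmult_le_compat_l; [apply pow_le; lra|].
  (* The coefficients of [Q4_error_terms] do not depend on its arguments. *)
  change (coef_norm (Q4_error_terms 0 0 0 0 0 0 0 0 0 0 0 0 0 0))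
    with (coef_norm (Q4_error_terms h u T ub Tb x D1 D2 D4 D5 rm2 rm1 r1 r2)).
  apply sum_products_bound; [rewrite Rabs_pos_eq; lra | exact HB | exact Hfac].
Qed.

Lemma Q4_local_consistency (f : R -> R) (u T Cu CT : R) :
  smooth f -> rapidly_decaying f ->
  exists C, forall h ub Tb x, 0 < h <= 1 ->
    Rabs (ub - u) <= Cu * h ^ 4 -> Rabs (Tb - T) <= CT * h ^ 4 ->
    Rabs (Q4_local h ub Tb ub (Tb + h ^ 2 / 4) x
            (f (x + -2 * h)) (f (x + -1 * h)) (f x) (f (x + 1 * h)) (f (x + 2 * h))
          - (f x + (x - u) * Derive f x + T * Derive_n f 2 x)) <= C * h ^ 4.
Proof.
  intros Hs Hr.
  destruct (rapidly_decaying_bounds f 1 Hr) as [c1 H1].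
  destruct (rapidly_decaying_bounds f 2 Hr) as [c2 H2].
  destruct (rapidly_decaying_bounds f 4 Hr) as [c4 H4].
  destruct (rapidly_decaying_bounds f 5 Hr) as [c5 H5].
  destruct (rapidly_decaying_bounds f 6 Hr) as [c6 H6].
  set (B := 1 + Rabs u + Rabs T + Rabs Cu + Rabs CT + Rabs c1 + Rabs c2 + Rabs c4 + Rabs c5
            + 3 * Rabs c6).
  pose proof (Rabs_pos u). pose proof (Rabs_pos T). pose proof (Rabs_pos Cu).
  pose proof (Rabs_pos CT). pose proof (Rabs_pos c1). pose proof (Rabs_pos c2).
  pose proof (Rabs_pos c4). pose proof (Rabs_pos c5). pose proof (Rabs_pos c6).
  assert (HB : forall a c, Rabs a <= c -> Rabs c <= B - 1 -> Rabs a <= B)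
    by (intros a c Hac Hc; pose proof (Rle_abs c); lra).
  exists (coef_norm (Q4_error_terms 0 0 0 0 0 0 0 0 0 0 0 0 0 0) * B ^ 2).
  intros h ub Tb x Hh Hu HT.
  assert (Htaylor : forall k, Rabs k <= 2 -> exists r, f (x + k * h)
            = taylor5_at h (f x) (Derive_n f 1 x) (Derive_n f 2 x) (Derive_n f 3 x)
                (Derive_n f 4 x) (Derive_n f 5 x) r k /\ Rabs r <= B /\ Rabs (x * r) <= B).
  { intros k Hk. destruct (taylor5_grid f x h k c6 c6 Hs Hh Hk) as (r & E & Br & Bxr);
      [apply H6 | apply H6 |].
    exists r. split; [exact E|].
    split; [apply (HB _ c6) | apply (HB _ (3 * c6))]; try (unfold B; lra).
    rewrite Rabs_mult, (Rabs_pos_eq 3) by lra. unfold B; lra. }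
  destruct (Htaylor (-2)) as (rm2 & Em2 & Bm2 & Bxm2); [rewrite Rabs_left; lra|].
  destruct (Htaylor (-1)) as (rm1 & Em1 & Bm1 & Bxm1); [rewrite Rabs_left; lra|].
  destruct (Htaylor 1) as (r1 & Ep1 & Bp1 & Bxp1); [rewrite Rabs_R1; lra|].
  destruct (Htaylor 2) as (r2 & Ep2 & Bp2 & Bxp2); [rewrite Rabs_pos_eq; lra|].
  rewrite Em2, Em1, Ep1, Ep2. change (Derive f x) with (Derive_n f 1 x).
  apply Q4_local_taylor_bound; [exact Hh | unfold B; lra|].
  assert (B1 : Rabs 1 <= B) by (rewrite Rabs_R1; unfold B; lra).
  assert (Bu : Rabs u <= B) by (unfold B; lra).
  assert (BT : Rabs T <= B) by (unfold B; lra).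
  assert (Beu : Rabs ((ub - u) / h ^ 4) <= B)
    by (apply (HB _ Cu); [apply Rabs_div_pow4_le; [lra | exact Hu] | unfold B; lra]).
  assert (BeT : Rabs ((Tb - T) / h ^ 4) <= B)
    by (apply (HB _ CT); [apply Rabs_div_pow4_le; [lra | exact HT] | unfold B; lra]).
  assert (BD1 : Rabs (Derive_n f 1 x) <= B) by (apply (HB _ c1); [apply H1 | unfold B; lra]).
  assert (BD2 : Rabs (Derive_n f 2 x) <= B) by (apply (HB _ c2); [apply H2 | unfold B; lra]).
  assert (BD4 : Rabs (Derive_n f 4 x) <= B) by (apply (HB _ c4); [apply H4 | unfold B; lra]).
  assert (BD5 : Rabs (Derive_n f 5 x) <= B) by (apply (HB _ c5); [apply H5 | unfold B; lra]).
  assert (BxD5 : Rabs (x * Derive_n f 5 x) <= B) by (apply (HB _ c5); [apply H5 | unfold B; lra]).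
  unfold Q4_error_terms. cbn [factors_le]. repeat split; assumption.
Qed.

Theorem Q4_consistency (f : R -> R) :
  smooth f -> rapidly_decaying f -> 0 < nf f ->
  exists C delta : R, 0 < delta /\
    forall dv : R, 0 < dv < delta -> forall j : Z,
      Rabs (QFP f (vj dv j) - Q4 dv (fun k => f (vj dv k)) j) <= C * dv ^ 4.
Proof.
  intros Hs Hr Hn.
  destruct (grid_moments_error f Hs Hr Hn) as (Cu & CT & delta & Hdelta & Hgrid).
  destruct (Q4_local_consistency f (uf f) (Tf f) Cu CT Hs Hr) as [C HC].
  exists C, delta. split; [lra|]. intros dv Hdv j.
  destruct (Hgrid dv Hdv) as (Hsum & Hm0 & Eu & ET).
  assert (Hdv0 : dv <> 0) by lra.
  rewrite QFP_expand, Q4_local_eq, utilde_moment, Ttilde_moment by assumption.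
  cbv beta. change (j - 2)%Z with (j + -2)%Z. change (j - 1)%Z with (j + -1)%Z.
  set (x := IZR j * dv). change (vj dv j) with x.
  assert (Hgrid_pt : forall s : Z, f (vj dv (j + s)) = f (x + IZR s * dv))
    by (intro s; unfold vj, x; rewrite plus_IZR; f_equal; ring).
  rewrite (Hgrid_pt (-2)%Z), (Hgrid_pt (-1)%Z), (Hgrid_pt 1%Z), (Hgrid_pt 2%Z).
  rewrite Rabs_minus_sym. apply HC; [lra | exact Eu | exact ET].
Qed.

Theorem proposition2 :
  (* (i) fourth-order consistency *)
  (forall f : R -> R,
     smooth f -> rapidly_decaying f -> 0 < nf f -> 0 < Tf f ->
     exists C delta : R, 0 < delta /\
       forall dv : R, 0 < dv < delta -> forall j : Z,
         Rabs (QFP f (vj dv j) - Q4 dv (fun k => f (vj dv k)) j) <= C * dv ^ 4)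
  /\
  (* (ii) exact conservation of mass, momentum and energy *)
  (forall (dv : R) (f : Z -> R),
     0 < dv ->
     zsummable (fun j => (1 + Rabs (vj dv j)) ^ 3 * f j) ->
     0 < dens dv f -> 0 < Tbreve dv f -> 0 < Ttilde dv f ->
     zsum (fun j => Q4 dv f j * dv) = 0 /\
     zsum (fun j => Q4 dv f j * vj dv j * dv) = 0 /\
     zsum (fun j => Q4 dv f j * (vj dv j ^ 2 / 2) * dv) = 0).
Proof.
  split.
  - intros f Hs Hr Hn _. exact (Q4_consistency f Hs Hr Hn).
  - intros dv f Hdv Hw Hn _ _. exact (Q4_conservation dv f Hdv Hw Hn).
Qed.
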